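(* Let $V$ admit $V^{(6)}(0)$ and satisfy $V(0)=V'(0)=0$, $V''(0)>0$. Moreover, let the origin be an isochronous center for $\ddot{x}=-V'(x)$. Then \[ V^{(4)}(0)=\frac{5\, V^{(3)}(0)^2}{3\, V''(0)}\,,\qquad V^{(6)}(0)=\frac{7\, V^{(3)}(0)\, V^{(5)}(0)}{V''(0)}-\frac{140\, V^{(3)}(0)^4}{9\, V''(0)^3}\,. \]
   Context: $V$ is a $C^1$ function near $0$ in $\mathbb{R}$ with $V(0)=V'(0)=0$ and $V''(0)>0$ (here $V$ is assumed to have as many derivatives as necessary). Let $J\ni 0$ be an open interval such that $V$ is strictly increasing on $J\cap\mathbb{R}_+$, strictly decreasing on $J\cap\mathbb{R}_-$, and for each $x\in J$ there is a unique $h(x)\in J$ with $V(h(x))=V(x)$ and $\mathrm{sgn}(h(x))=-\mathrm{sgn}(x)$ (the involution associated with $V$). Then all orbits of $\ddot x=-V'(x)$ which intersect the interval $J$ of the $x$-axis in the $x,\dot x$-plane are periodic and enclose $(0,0)$; the origin is called an isochronous center for $\ddot x=-V'(x)$ if all these orbits have the same period. Equivalently, $V(x)=\frac{V''(0)}{8}(x-h(x))^2$ for $x\in J$. *)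

From Stdlib Require Import Reals Lra.
From Coquelicot Require Import Coquelicot.
Open Scope R_scope.

Definition sgn (x : R) : R :=
  if Rlt_dec 0 x then 1 else if Rlt_dec x 0 then -1 else 0.

(* "V admits V^(6)(0)": the derivatives V', ..., V^(5) exist on a
   neighbourhood of 0 and V^(5) is differentiable at 0. *)
Definition admits_D6_at0 (V : R -> R) : Prop :=
  (exists d : R, 0 < d /\
     forall k : nat, (k <= 5)%nat -> forall x : R, Rabs x < d -> ex_derive_n V k x)
  /\ ex_derive_n V 6 0.

(* Standing assumptions on the open interval J = (alpha, beta) containing 0:
   V is C^1 on J, strictly increasing on J ∩ R+, strictly decreasing on
   J ∩ R-, and the involution h is well defined on J. *)
Definition in_J (alpha beta x : R) : Prop := alpha < x < beta.

Definition standing_J (V : R -> R) (alpha beta : R) : Prop :=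
  alpha < 0 < beta /\
  (forall x, in_J alpha beta x -> ex_derive V x /\ continuous (Derive V) x) /\
  (forall x y, in_J alpha beta x -> in_J alpha beta y -> 0 <= x -> x < y -> V x < V y) /\
  (forall x y, in_J alpha beta x -> in_J alpha beta y -> x < y -> y <= 0 -> V y < V x) /\
  (forall x, in_J alpha beta x ->
     exists! y, in_J alpha beta y /\ V y = V x /\ sgn y = - sgn x).

Definition is_solution (V : R -> R) (a : R) (x v : R -> R) : Prop :=
  (forall t, is_derive x t (v t)) /\
  (forall t, is_derive v t (- Derive V (x t))) /\
  x 0 = a /\ v 0 = 0.

Definition minimal_period (x : R -> R) (T : R) : Prop :=
  0 < T /\ (forall t, x (t + T) = x t) /\
  (forall S, 0 < S < T -> exists t, x (t + S) <> x t).

Definition isochronous_center (V : R -> R) (alpha beta : R) : Prop :=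
  exists T : R, 0 < T /\
    forall a, in_J alpha beta a -> a <> 0 ->
      (exists x v, is_solution V a x v) /\
      (forall x v, is_solution V a x v -> minimal_period x T).

From Stdlib Require Import Reals Lra Lia Psatz ClassicalEpsilon.
From Coquelicot Require Import Coquelicot.
From Stdlib Require Import Factorial.
Open Scope R_scope.

(* Near 0 write [V = s^2] with [s x = sgn x * sqrt (V x)]; the Taylor expansion of
   [V] gives the jet [S = s1 x + ... + s5 x^5] of [s], and Lagrange inversion gives the jet of
   [G = s^-1].  In the coordinate [s] the energy [V x + v^2 / 2] is [s^2 + v^2 / 2], so the orbit
   through [(G r, 0)] is [x = G (r cos th)], [v = - sqrt 2 r sin th], and its period is
   [/ sqrt 2 * int_0^(2 pi) G' (r cos p) dp = / sqrt 2 * (2 pi g1 + 3 pi g3 r^2 + 15 pi / 4 g5 r^4)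
   + o(r^4)], where [g_k] are the coefficients of the jet of [G].  Isochrony forces [g3 = g5 = 0],
   and rewriting these two equations in terms of the derivatives of [V] gives the theorem. *)

(** * Little-o near the origin *)

Definition near0 (P : R -> Prop) : Prop :=
  exists d, 0 < d /\ forall x, Rabs x < d -> P x.

Definition littleo (n : nat) (f : R -> R) : Prop :=
  forall eps, 0 < eps -> near0 (fun x => Rabs (f x) <= eps * Rabs x ^ n).

Lemma near0_abs_lt c : 0 < c -> near0 (fun x => Rabs x < c).
Proof. intros Hc; exists c; split; auto. Qed.

Lemma near0_impl (P Q : R -> Prop) : (forall x, P x -> Q x) -> near0 P -> near0 Q.
Proof. intros H [d [Hd HP]]; exists d; split; auto. Qed.

Lemma near0_and (P Q : R -> Prop) : near0 P -> near0 Q -> near0 (fun x => P x /\ Q x).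
Proof.
intros [d1 [Hd1 H1]] [d2 [Hd2 H2]]; exists (Rmin d1 d2); split; [now apply Rmin_pos|].
intros x Hx; split; [apply H1|apply H2]; eapply Rlt_le_trans; eauto; [apply Rmin_l|apply Rmin_r].
Qed.

Definition bounded_near0 (g : R -> R) : Prop :=
  exists M, near0 (fun x => Rabs (g x) <= M).

Section Littleo.

Implicit Types (f g : R -> R) (n : nat).

Lemma littleo_ext_near n f g :
  near0 (fun x => f x = g x) -> littleo n f -> littleo n g.
Proof.
intros [d0 [Hd0 E]] H eps He; destruct (H eps He) as [d [Hd H1]].
exists (Rmin d d0); split; [now apply Rmin_pos|].
intros x Hx; rewrite <- E; [apply H1|]; eapply Rlt_le_trans; eauto; [apply Rmin_l|apply Rmin_r].
Qed.

Lemma littleo_ext n f g : (forall x, f x = g x) -> littleo n f -> littleo n g.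
Proof. intros E; apply littleo_ext_near; exists 1; split; [lra|auto]. Qed.

Lemma littleo_dominated n f g :
  near0 (fun x => Rabs (f x) <= Rabs (g x)) -> littleo n g -> littleo n f.
Proof.
intros [d0 [Hd0 E]] H eps He; destruct (H eps He) as [d [Hd H1]].
exists (Rmin d d0); split; [now apply Rmin_pos|].
intros x Hx; eapply Rle_trans; [apply E|apply H1];
  eapply Rlt_le_trans; eauto; [apply Rmin_r|apply Rmin_l].
Qed.

Lemma littleo_plus n f g : littleo n f -> littleo n g -> littleo n (fun x => f x + g x).
Proof.
intros Hf Hg eps He.
destruct (Hf (eps/2)) as [d1 [Hd1 H1]]; [lra|].
destruct (Hg (eps/2)) as [d2 [Hd2 H2]]; [lra|].
exists (Rmin d1 d2); split; [now apply Rmin_pos|]; intros x Hx.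
assert (A1 := H1 x (Rlt_le_trans _ _ _ Hx (Rmin_l _ _))).
assert (A2 := H2 x (Rlt_le_trans _ _ _ Hx (Rmin_r _ _))).
eapply Rle_trans; [apply Rabs_triang|lra].
Qed.

Lemma littleo_mult_bounded n f g :
  littleo n f -> bounded_near0 g -> littleo n (fun x => f x * g x).
Proof.
intros Hf [M [d0 [Hd0 Hg]]] eps He.
assert (HM : 0 < Rabs M + 1) by (pose proof (Rabs_pos M); lra).
destruct (Hf (eps / (Rabs M + 1))) as [d [Hd H1]]; [now apply Rdiv_lt_0_compat|].
exists (Rmin d d0); split; [now apply Rmin_pos|]; intros x Hx.
assert (A1 := H1 x (Rlt_le_trans _ _ _ Hx (Rmin_l _ _))).
assert (A2 := Hg x (Rlt_le_trans _ _ _ Hx (Rmin_r _ _))).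
assert (A3 : Rabs (g x) <= Rabs M + 1) by (pose proof (Rle_abs M); lra).
rewrite Rabs_mult.
replace (eps * Rabs x ^ n) with (eps / (Rabs M + 1) * Rabs x ^ n * (Rabs M + 1)) by (field; lra).
apply Rmult_le_compat; auto using Rabs_pos.
Qed.

Lemma bounded_near0_const c : bounded_near0 (fun _ => c).
Proof. exists (Rabs c), 1; split; [lra|intros; lra]. Qed.

Lemma littleo_scal n c f : littleo n f -> littleo n (fun x => c * f x).
Proof.
intros Hf; apply littleo_ext with (fun x => f x * c); [intros; ring|].
now apply littleo_mult_bounded, bounded_near0_const.
Qed.

Lemma littleo_opp n f : littleo n f -> littleo n (fun x => - f x).
Proof. intros H; apply littleo_ext with (fun x => -1 * f x); [intros; ring|now apply littleo_scal]. Qed.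

Lemma littleo_minus n f g : littleo n f -> littleo n g -> littleo n (fun x => f x - g x).
Proof. intros Hf Hg; apply littleo_plus; [|apply littleo_opp]; auto. Qed.

Lemma littleo_le_order m n f : (m <= n)%nat -> littleo n f -> littleo m f.
Proof.
intros Hle; induction Hle as [|n Hle IH]; auto; intros H; apply IH.
intros eps He; destruct (H eps He) as [d [Hd H1]].
exists (Rmin d 1); split; [apply Rmin_pos; lra|]; intros x Hx.
assert (Hx1 : Rabs x <= 1) by (pose proof (Rmin_r d 1); lra).
eapply Rle_trans; [apply H1; eapply Rlt_le_trans; [apply Hx|apply Rmin_l]|]; simpl.
apply Rmult_le_compat_l; [lra|].
pose proof (pow_le (Rabs x) n (Rabs_pos x)); pose proof (Rabs_pos x); nra.
Qed.

Lemma continuous_bounded_near0 g : continuous g 0 -> bounded_near0 g.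
Proof.
intros Hc; apply continuity_pt_filterlim in Hc.
destruct (Hc 1 Rlt_0_1) as [d [Hd H]].
exists (Rabs (g 0) + 1), d; split; auto; intros x Hx.
assert (Rabs (g x - g 0) < 1).
{ destruct (Req_dec x 0) as [->|Hx0]; [rewrite Rminus_diag, Rabs_R0; lra|].
  apply H; repeat split; auto; simpl; unfold R_dist; now rewrite Rminus_0_r. }
pose proof (Rabs_triang_inv (g x) (g 0)); lra.
Qed.

Lemma littleo_bounded_near0 n f : littleo n f -> bounded_near0 f.
Proof.
intros H; destruct (H 1 Rlt_0_1) as [d [Hd H1]]; exists 1, (Rmin d 1); split; [apply Rmin_pos; lra|].
intros x Hx; eapply Rle_trans; [apply H1; eapply Rlt_le_trans; [apply Hx|apply Rmin_l]|].
rewrite Rmult_1_l, <- (pow1 n); apply pow_incr; split; [apply Rabs_pos|]; pose proof (Rmin_r d 1); lra.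
Qed.

Lemma littleo_pow_mult n Q : continuous Q 0 -> littleo n (fun x => x ^ S n * Q x).
Proof.
intros HQ eps He; destruct (continuous_bounded_near0 Q HQ) as [M [d [Hd HM]]].
assert (HM1 : 0 < Rabs M + 1) by (pose proof (Rabs_pos M); lra).
exists (Rmin d (eps / (Rabs M + 1))); split; [apply Rmin_pos; auto; now apply Rdiv_lt_0_compat|].
intros x Hx; rewrite Rabs_mult, <- RPow_abs; simpl.
assert (A1 : Rabs (Q x) <= Rabs M + 1)
  by (pose proof (Rle_abs M); specialize (HM x (Rlt_le_trans _ _ _ Hx (Rmin_l _ _))); lra).
assert (A2 : Rabs x * (Rabs M + 1) <= eps).
{ pose proof (Rmin_r d (eps / (Rabs M + 1))).
  apply Rmult_le_reg_r with (/ (Rabs M + 1)); [now apply Rinv_0_lt_compat|].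
  rewrite Rmult_assoc, Rinv_r, Rmult_1_r by lra; lra. }
assert (A3 : Rabs x * Rabs (Q x) <= eps) by (pose proof (Rabs_pos x); nra).
pose proof (pow_le (Rabs x) n (Rabs_pos x)); nra.
Qed.

Lemma littleo_comp n f g :
  littleo n f -> (exists C, near0 (fun x => Rabs (g x) <= C * Rabs x)) ->
  littleo n (fun x => f (g x)).
Proof.
intros Hf [C [d0 [Hd0 Hg]]] eps He.
set (C' := Rabs C + 1).
assert (HC' : 0 < C') by (unfold C'; pose proof (Rabs_pos C); lra).
assert (HCn : 0 < C' ^ n) by (now apply pow_lt).
destruct (Hf (eps / C' ^ n)) as [d [Hd H1]]; [now apply Rdiv_lt_0_compat|].
exists (Rmin d0 (d / C')); split; [apply Rmin_pos; auto; now apply Rdiv_lt_0_compat|].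
intros x Hx.
assert (A1 : Rabs (g x) <= C' * Rabs x).
{ eapply Rle_trans; [apply Hg; eapply Rlt_le_trans; [apply Hx|apply Rmin_l]|].
  apply Rmult_le_compat_r; [apply Rabs_pos|unfold C'; pose proof (Rle_abs C); lra]. }
assert (A2 : C' * Rabs x < d).
{ assert (Rabs x < d / C') by (eapply Rlt_le_trans; [apply Hx|apply Rmin_r]).
  apply Rmult_lt_reg_r with (/ C'); [now apply Rinv_0_lt_compat|].
  replace (C' * Rabs x * / C') with (Rabs x) by (field; lra); exact H. }
eapply Rle_trans; [apply H1; lra|].
replace (eps * Rabs x ^ n) with (eps / C' ^ n * (C' * Rabs x) ^ n)
  by (rewrite Rpow_mult_distr; field; lra).
apply Rmult_le_compat_l; [apply Rlt_le, Rdiv_lt_0_compat; auto|].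
apply pow_incr; split; [apply Rabs_pos|exact A1].
Qed.

(* Division by a factor [g] of exact order one: [h = f / g] gains back one power of [x]. *)
Lemma littleo_div n f g h :
  littleo (S n) f -> h 0 = 0 ->
  (exists c, 0 < c /\ near0 (fun x => x <> 0 -> c * Rabs x <= Rabs (g x) /\ h x * g x = f x)) ->
  littleo n h.
Proof.
intros Hf H0 [c [Hc [d0 [Hd0 Hg]]]] eps He.
destruct (Hf (eps * c)) as [d [Hd H1]]; [nra|].
exists (Rmin d d0); split; [now apply Rmin_pos|]; intros x Hx.
destruct (Req_dec x 0) as [->|Hx0].
{ rewrite H0, Rabs_R0; apply Rmult_le_pos; [lra|apply pow_le; lra]. }
destruct (Hg x (Rlt_le_trans _ _ _ Hx (Rmin_r _ _)) Hx0) as [B1 B2].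
assert (A1 := H1 x (Rlt_le_trans _ _ _ Hx (Rmin_l _ _))).
rewrite <- B2, Rabs_mult in A1; simpl in A1.
assert (Hax : 0 < Rabs x) by (now apply Rabs_pos_lt).
pose proof (Rabs_pos (h x)); pose proof (pow_le (Rabs x) n (Rabs_pos x)).
assert (Rabs (h x) * (c * Rabs x) <= eps * c * (Rabs x * Rabs x ^ n))
  by (eapply Rle_trans; [|apply A1]; now apply Rmult_le_compat_l).
apply Rmult_le_reg_r with (c * Rabs x); nra.
Qed.

Lemma littleo_antiderivative m (d : R) (g g' p p' : R -> R) : 0 < d ->
  (forall x, Rabs x < d -> is_derive g x (g' x)) ->
  (forall x, is_derive p x (p' x)) -> g 0 = p 0 ->
  littleo m (fun x => g' x - p' x) -> littleo (S m) (fun x => g x - p x).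
Proof.
intros Hd Hg Hp H0 Hs eps He.
destruct (Hs eps He) as [d1 [Hd1 H1]].
exists (Rmin d d1); split; [now apply Rmin_pos|]; intros x Hx.
assert (Hxd : Rabs x < d) by (eapply Rlt_le_trans; [apply Hx|apply Rmin_l]).
assert (Hxd1 : Rabs x < d1) by (eapply Rlt_le_trans; [apply Hx|apply Rmin_r]).
assert (Hb : forall y, Rmin 0 x <= y <= Rmax 0 x -> Rabs y <= Rabs x).
{ intros y [Hy1 Hy2]; unfold Rmin, Rmax in *; destruct (Rle_dec 0 x).
  - rewrite !Rabs_right; lra.
  - rewrite !Rabs_left1; lra. }
assert (Hder : forall y, Rmin 0 x <= y <= Rmax 0 x ->
          is_derive (fun y => g y - p y) y (g' y - p' y)).
{ intros y Hy; apply (is_derive_minus g p); [apply Hg|apply Hp].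
  pose proof (Hb y Hy); lra. }
destruct (MVT_gen (fun y => g y - p y) 0 x (fun y => g' y - p' y)) as [c [Hc1 Hc2]].
- intros y Hy; apply Hder; lra.
- intros y Hy; apply continuity_pt_filterlim, (ex_derive_continuous (fun y => g y - p y)).
  eexists; now apply Hder.
- rewrite H0, Rminus_diag, !Rminus_0_r in Hc2; rewrite Hc2, Rabs_mult; simpl.
  assert (Hcx := Hb c Hc1).
  assert (A := H1 c (Rle_lt_trans _ _ _ Hcx Hxd1)).
  assert (eps * Rabs c ^ m <= eps * Rabs x ^ m)
    by (apply Rmult_le_compat_l; [lra|apply pow_incr; split; auto; apply Rabs_pos]).
  pose proof (Rabs_pos x); pose proof (Rabs_pos (g' c - p' c)); nra.
Qed.

Lemma is_derive_littleo1 f l : is_derive f 0 l -> littleo 1 (fun x => f x - f 0 - l * x).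
Proof.
intros H; apply is_derive_Reals in H; intros eps He.
destruct (H eps He) as [d Hd]; exists d; split; [apply cond_pos|]; intros x Hx.
destruct (Req_dec x 0) as [->|Hx0].
{ replace (f 0 - f 0 - l * 0) with 0 by ring; rewrite Rabs_R0; simpl; nra. }
specialize (Hd x Hx0 Hx); rewrite Rplus_0_l in Hd; simpl; rewrite Rmult_1_r.
replace (f x - f 0 - l * x) with (((f x - f 0) / x - l) * x) by (field; auto).
rewrite Rabs_mult; pose proof (Rabs_pos_lt x Hx0); nra.
Qed.

Lemma littleo1_is_derive f l : f 0 = 0 -> littleo 1 (fun x => f x - l * x) -> is_derive f 0 l.
Proof.
intros H0 H; apply is_derive_Reals; intros eps He.
destruct (H (eps/2)) as [d [Hd H1]]; [lra|].
exists (mkposreal d Hd); intros h Hh0 Hh; simpl in Hh.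
rewrite Rplus_0_l, H0, Rminus_0_r; specialize (H1 h Hh); simpl in H1.
replace (f h / h - l) with ((f h - l * h) / h) by (field; auto).
unfold Rdiv; rewrite Rabs_mult, Rabs_inv; pose proof (Rabs_pos_lt h Hh0).
apply Rle_lt_trans with (eps/2); [|lra].
apply Rmult_le_reg_r with (Rabs h); auto; rewrite Rmult_assoc, Rinv_l; lra.
Qed.

Lemma littleo0_continuous f : littleo 0 (fun x => f x - f 0) -> continuous f 0.
Proof.
intros H; apply continuity_pt_filterlim; intros eps He.
destruct (H (eps/2)) as [d [Hd H1]]; [lra|]; exists d; split; auto; intros x [_ Hx].
simpl in Hx; unfold R_dist in Hx; rewrite Rminus_0_r in Hx; specialize (H1 x Hx); simpl in H1.
simpl; unfold R_dist; lra.
Qed.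

Lemma continuous_littleo0 g : continuous g 0 -> littleo 0 (fun x => g x - g 0).
Proof.
intros Hc eps He; apply continuity_pt_filterlim in Hc.
destruct (Hc eps He) as [d [Hd H]]; exists d; split; auto; intros x Hx; simpl; rewrite Rmult_1_r.
destruct (Req_dec x 0) as [->|Hx0]; [rewrite Rminus_diag, Rabs_R0; lra|].
apply Rlt_le, H; repeat split; auto; simpl; unfold R_dist; now rewrite Rminus_0_r.
Qed.

End Littleo.

(** * Jets of order five *)

Record jet := mkjet {c0 : R; c1 : R; c2 : R; c3 : R; c4 : R; c5 : R}.

Definition jet_eval (a : jet) (x : R) : R :=
  c0 a + c1 a * x + c2 a * x ^ 2 + c3 a * x ^ 3 + c4 a * x ^ 4 + c5 a * x ^ 5.

Definition has_jet (n : nat) (f : R -> R) (a : jet) : Prop :=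
  littleo n (fun x => f x - jet_eval a x).

Definition jet_const (c : R) : jet := mkjet c 0 0 0 0 0.

Definition jet_add (a b : jet) : jet :=
  mkjet (c0 a + c0 b) (c1 a + c1 b) (c2 a + c2 b) (c3 a + c3 b) (c4 a + c4 b) (c5 a + c5 b).

Definition jet_scal (c : R) (a : jet) : jet :=
  mkjet (c * c0 a) (c * c1 a) (c * c2 a) (c * c3 a) (c * c4 a) (c * c5 a).

Definition jet_mul (a b : jet) : jet :=
  mkjet (c0 a * c0 b)
        (c0 a * c1 b + c1 a * c0 b)
        (c0 a * c2 b + c1 a * c1 b + c2 a * c0 b)
        (c0 a * c3 b + c1 a * c2 b + c2 a * c1 b + c3 a * c0 b)
        (c0 a * c4 b + c1 a * c3 b + c2 a * c2 b + c3 a * c1 b + c4 a * c0 b)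
        (c0 a * c5 b + c1 a * c4 b + c2 a * c3 b + c3 a * c2 b + c4 a * c1 b + c5 a * c0 b).

Fixpoint jet_pow (b : jet) (k : nat) : jet :=
  match k with O => jet_const 1 | S k => jet_mul (jet_pow b k) b end.

Definition jet_comp (a b : jet) : jet :=
  jet_add (jet_const (c0 a)) (jet_add (jet_scal (c1 a) b)
    (jet_add (jet_scal (c2 a) (jet_pow b 2)) (jet_add (jet_scal (c3 a) (jet_pow b 3))
    (jet_add (jet_scal (c4 a) (jet_pow b 4)) (jet_scal (c5 a) (jet_pow b 5)))))).

(* The coefficients of [jet_inv a] solve [jet_mul a (jet_inv a) = jet_const 1] degree by degree. *)
Definition jet_inv (a : jet) : jet :=
  let i0 := / c0 a in
  let i1 := - (c1 a * i0) / c0 a in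
  let i2 := - (c1 a * i1 + c2 a * i0) / c0 a in
  let i3 := - (c1 a * i2 + c2 a * i1 + c3 a * i0) / c0 a in
  let i4 := - (c1 a * i3 + c2 a * i2 + c3 a * i1 + c4 a * i0) / c0 a in
  let i5 := - (c1 a * i4 + c2 a * i3 + c3 a * i2 + c4 a * i1 + c5 a * i0) / c0 a in
  mkjet i0 i1 i2 i3 i4 i5.

Lemma jet_mul_inv a : c0 a <> 0 -> jet_mul a (jet_inv a) = jet_const 1.
Proof.
destruct a as [a0 a1 a2 a3 a4 a5]; simpl; intros H.
unfold jet_mul, jet_inv, jet_const; simpl; f_equal; field; auto.
Qed.

Lemma jet_comp_expand a b : c0 b = 0 -> jet_comp a b = mkjet (c0 a) (c1 a * c1 b)
  (c1 a * c2 b + c2 a * c1 b ^ 2)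
  (c1 a * c3 b + 2 * c2 a * c1 b * c2 b + c3 a * c1 b ^ 3)
  (c1 a * c4 b + c2 a * (2 * c1 b * c3 b + c2 b ^ 2) + 3 * c3 a * c1 b ^ 2 * c2 b
     + c4 a * c1 b ^ 4)
  (c1 a * c5 b + c2 a * (2 * c1 b * c4 b + 2 * c2 b * c3 b)
     + c3 a * (3 * c1 b ^ 2 * c3 b + 3 * c1 b * c2 b ^ 2) + 4 * c4 a * c1 b ^ 3 * c2 b
     + c5 a * c1 b ^ 5).
Proof.
destruct b as [b0 b1 b2 b3 b4 b5]; simpl; intros ->.
unfold jet_comp, jet_add, jet_scal, jet_const, jet_mul; simpl; f_equal; ring.
Qed.

Lemma jet_eval_continuous a x : continuous (jet_eval a) x.
Proof. apply (ex_derive_continuous (jet_eval a)); unfold jet_eval; auto_derive; auto. Qed.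

Lemma has_jet_eval n a : has_jet n (jet_eval a) a.
Proof.
intros eps He; exists 1; split; [lra|]; intros x _.
rewrite Rminus_diag, Rabs_R0; apply Rmult_le_pos; [lra|apply pow_le, Rabs_pos].
Qed.

Lemma has_jet_le_order m n f a : (m <= n)%nat -> has_jet n f a -> has_jet m f a.
Proof. apply littleo_le_order. Qed.

Lemma has_jet_const n c : has_jet n (fun _ => c) (jet_const c).
Proof.
eapply littleo_ext; [|apply (has_jet_eval n (jet_const c))].
intros x; unfold jet_eval, jet_const; simpl; ring.
Qed.

Lemma has_jet_add n f g a b :
  has_jet n f a -> has_jet n g b -> has_jet n (fun x => f x + g x) (jet_add a b).
Proof.
intros Hf Hg; eapply littleo_ext; [|apply (littleo_plus _ _ _ Hf Hg)].
intros x; unfold jet_eval, jet_add; simpl; ring.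
Qed.

Lemma has_jet_scal n c f a : has_jet n f a -> has_jet n (fun x => c * f x) (jet_scal c a).
Proof.
intros Hf; eapply littleo_ext; [|apply (littleo_scal _ c _ Hf)].
intros x; unfold jet_eval, jet_scal; simpl; ring.
Qed.

Lemma has_jet_mul n f g a b : (n <= 5)%nat ->
  has_jet n f a -> has_jet n g b -> has_jet n (fun x => f x * g x) (jet_mul a b).
Proof.
intros Hn Hf Hg.
(* the terms of degree 6 to 10 of the product of the two polynomials *)
set (Q := fun x => (c1 a * c5 b + c2 a * c4 b + c3 a * c3 b + c4 a * c2 b + c5 a * c1 b)
  + (c2 a * c5 b + c3 a * c4 b + c4 a * c3 b + c5 a * c2 b) * x
  + (c3 a * c5 b + c4 a * c4 b + c5 a * c3 b) * x ^ 2
  + (c4 a * c5 b + c5 a * c4 b) * x ^ 3 + c5 a * c5 b * x ^ 4).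
apply littleo_ext with (fun x => (f x - jet_eval a x) * (g x - jet_eval b x)
   + (f x - jet_eval a x) * jet_eval b x + (g x - jet_eval b x) * jet_eval a x + x ^ 6 * Q x).
{ intros x; unfold Q, jet_eval, jet_mul; simpl; ring. }
repeat apply littleo_plus.
- apply littleo_mult_bounded; auto; eapply littleo_bounded_near0; eauto.
- apply littleo_mult_bounded, continuous_bounded_near0, jet_eval_continuous; auto.
- apply littleo_mult_bounded, continuous_bounded_near0, jet_eval_continuous; auto.
- apply littleo_le_order with 5%nat; auto; apply littleo_pow_mult.
  apply (ex_derive_continuous Q); unfold Q; auto_derive; auto.
Qed.

Lemma has_jet_pow n g b k : (n <= 5)%nat -> has_jet n g b -> has_jet n (fun x => g x ^ k) (jet_pow b k).
Proof.
intros Hn Hg; induction k as [|k IH]; [exact (has_jet_const n 1)|].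
eapply littleo_ext; [|apply (has_jet_mul _ _ _ _ _ Hn IH Hg)]; intros x; simpl; ring.
Qed.

Lemma has_jet_linear_bound n g b : (1 <= n)%nat -> c0 b = 0 -> has_jet n g b ->
  exists C, near0 (fun x => Rabs (g x) <= C * Rabs x).
Proof.
intros Hn H0 Hg.
set (q := fun x => c1 b + c2 b * x + c3 b * x ^ 2 + c4 b * x ^ 3 + c5 b * x ^ 4).
assert (Hq : littleo 1 (fun x => g x - x * q x)).
{ eapply littleo_ext; [|apply (littleo_le_order 1 n _ Hn Hg)].
  intros x; unfold q, jet_eval; rewrite H0; ring. }
destruct (Hq 1 Rlt_0_1) as [d1 [Hd1 H1]].
destruct (continuous_bounded_near0 q) as [M [d2 [Hd2 HM]]].
{ apply (ex_derive_continuous q); unfold q; auto_derive; auto. }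
exists (M + 1), (Rmin d1 d2); split; [now apply Rmin_pos|]; intros x Hx.
specialize (H1 x (Rlt_le_trans _ _ _ Hx (Rmin_l _ _))); simpl in H1.
specialize (HM x (Rlt_le_trans _ _ _ Hx (Rmin_r _ _))).
replace (g x) with ((g x - x * q x) + x * q x) by ring.
eapply Rle_trans; [apply Rabs_triang|]; rewrite Rabs_mult.
pose proof (Rabs_pos x); nra.
Qed.

Lemma has_jet_comp n f g a b : (1 <= n <= 5)%nat -> c0 b = 0 ->
  has_jet n f a -> has_jet n g b -> has_jet n (fun x => f (g x)) (jet_comp a b).
Proof.
intros Hn H0 Hf Hg.
assert (Hout : littleo n (fun x => f (g x) - jet_eval a (g x)))
  by exact (littleo_comp n _ g Hf (has_jet_linear_bound n g b ltac:(lia) H0 Hg)).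
assert (Hpow : forall k, has_jet n (fun x => g x ^ k) (jet_pow b k))
  by (intros; apply has_jet_pow; auto; lia).
assert (Hin : has_jet n (fun x => jet_eval a (g x)) (jet_comp a b)).
{ apply littleo_ext with (fun x => c0 a + (c1 a * g x ^ 1 + (c2 a * g x ^ 2
    + (c3 a * g x ^ 3 + (c4 a * g x ^ 4 + c5 a * g x ^ 5)))) - jet_eval (jet_comp a b) x).
  { intros x; cbv beta; replace (jet_eval a (g x)) with (c0 a + (c1 a * g x ^ 1 + (c2 a * g x ^ 2
      + (c3 a * g x ^ 3 + (c4 a * g x ^ 4 + c5 a * g x ^ 5))))) by (unfold jet_eval; ring).
    reflexivity. }
  unfold jet_comp; apply has_jet_add; [apply has_jet_const|].
  assert (H1 : jet_pow b 1 = b) by (destruct b; simpl; unfold jet_mul, jet_const; simpl; f_equal; ring).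
  rewrite <- H1 at 1.
  repeat (apply has_jet_add; [apply has_jet_scal, Hpow|]); apply has_jet_scal, Hpow. }
eapply littleo_ext; [|apply (littleo_plus _ _ _ Hout Hin)]; intros x; simpl; ring.
Qed.

Lemma has_jet_bounded_away n f a : has_jet n f a -> c0 a <> 0 ->
  near0 (fun x => Rabs (c0 a) / 2 <= Rabs (f x)).
Proof.
intros Hf Ha.
assert (H : littleo 0 (fun x => f x - c0 a)).
{ apply littleo_ext with (fun x => (f x - jet_eval a x) + (jet_eval a x - jet_eval a 0)).
  { intros x; unfold jet_eval at 3; ring. }
  apply littleo_plus; [apply (littleo_le_order 0 n); auto; lia|].
  apply continuous_littleo0, jet_eval_continuous. }
assert (Hpos : 0 < Rabs (c0 a) / 2) by (pose proof (Rabs_pos_lt _ Ha); lra).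
destruct (H _ Hpos) as [d [Hd H1]]; exists d; split; auto; intros x Hx.
specialize (H1 x Hx); simpl in H1.
pose proof (Rabs_triang_inv (c0 a) (c0 a - f x)); rewrite Rabs_minus_sym in H1.
replace (c0 a - (c0 a - f x)) with (f x) in H0 by ring; lra.
Qed.

Lemma has_jet_inv n f a : (n <= 5)%nat -> c0 a <> 0 ->
  has_jet n f a -> has_jet n (fun x => / f x) (jet_inv a).
Proof.
intros Hn Ha Hf.
assert (Hprod : has_jet n (fun x => f x * jet_eval (jet_inv a) x) (jet_const 1)).
{ rewrite <- (jet_mul_inv a Ha); apply has_jet_mul; auto; apply has_jet_eval. }
destruct (has_jet_bounded_away n f a Hf Ha) as [d [Hd Hlb]].
assert (Hpos : 0 < Rabs (c0 a)) by now apply Rabs_pos_lt.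
apply littleo_ext_near with (fun x => - (f x * jet_eval (jet_inv a) x - 1) * / f x).
{ exists d; split; auto; intros x Hx.
  assert (f x <> 0) by (intros E; specialize (Hlb x Hx); rewrite E, Rabs_R0 in Hlb; lra).
  field; auto. }
apply littleo_mult_bounded.
- apply littleo_opp; eapply littleo_ext; [|apply Hprod].
  intros x; unfold jet_eval, jet_const; simpl; ring.
- exists (2 / Rabs (c0 a)), d; split; auto; intros x Hx; specialize (Hlb x Hx).
  rewrite Rabs_inv; replace (2 / Rabs (c0 a)) with (/ (Rabs (c0 a) / 2)) by (field; lra).
  apply Rinv_le_contravar; lra.
Qed.

Definition jet_agree4 (a b : jet) : Prop :=
  c0 a = c0 b /\ c1 a = c1 b /\ c2 a = c2 b /\ c3 a = c3 b /\ c4 a = c4 b.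

Lemma has_jet_agree4 n f a b : (n <= 4)%nat -> jet_agree4 a b -> has_jet n f a -> has_jet n f b.
Proof.
intros Hn [E0 [E1 [E2 [E3 E4]]]] Hf.
apply littleo_ext with (fun x => (f x - jet_eval a x) + x ^ 5 * (c5 a - c5 b)).
{ intros x; unfold jet_eval; rewrite E0, E1, E2, E3, E4; ring. }
apply littleo_plus; auto; apply littleo_le_order with 4%nat; auto.
apply littleo_pow_mult, continuous_const.
Qed.

Definition jet_deriv (a : jet) : jet :=
  mkjet (c1 a) (2 * c2 a) (3 * c3 a) (4 * c4 a) (5 * c5 a) 0.

Definition jet_id : jet := mkjet 0 1 0 0 0 0.

(* Lagrange inversion up to order five, for a jet with [c0 a = 0] and [c1 a <> 0]. *)
Definition series_inverse (a : jet) : jet :=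
  let a1 := c1 a in let a2 := c2 a in let a3 := c3 a in let a4 := c4 a in let a5 := c5 a in
  mkjet 0 (/ a1) (- a2 / a1 ^ 3) ((2 * a2 ^ 2 - a1 * a3) / a1 ^ 5)
    ((- 5 * a2 ^ 3 + 5 * a1 * a2 * a3 - a1 ^ 2 * a4) / a1 ^ 7)
    ((14 * a2 ^ 4 - 21 * a1 * a2 ^ 2 * a3 + 3 * a1 ^ 2 * a3 ^ 2 + 6 * a1 ^ 2 * a2 * a4
      - a1 ^ 3 * a5) / a1 ^ 9).

Lemma jet_comp_series_inverse a : c0 a = 0 -> c1 a <> 0 ->
  jet_comp a (series_inverse a) = jet_id.
Proof.
intros H0 H1; rewrite jet_comp_expand by reflexivity.
destruct a as [a0 a1 a2 a3 a4 a5]; simpl in *; subst a0.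
unfold jet_id; f_equal; field; auto.
Qed.

Lemma jet_inv_deriv_series_inverse a : c1 a <> 0 ->
  jet_agree4 (jet_inv (jet_comp (jet_deriv a) (series_inverse a))) (jet_deriv (series_inverse a)).
Proof.
intros H1; unfold jet_agree4; rewrite jet_comp_expand by reflexivity.
destruct a as [a0 a1 a2 a3 a4 a5]; simpl in *.
unfold jet_inv; cbn [c0 c1 c2 c3 c4 c5]; repeat split; field; auto.
Qed.

(** * Taylor expansion of the potential *)

Definition taylor (V : R -> R) (k m : nat) (x : R) : R :=
  sum_f_R0 (fun j => Derive_n V (k + j) 0 * x ^ j / INR (fact j)) m.

Lemma taylor_at0 V k m : taylor V k m 0 = Derive_n V k 0.
Proof.
unfold taylor; induction m as [|m IH]; cbn [sum_f_R0].
- rewrite Nat.add_0_r; simpl; field.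
- rewrite IH; cbn [pow]; unfold Rdiv; ring.
Qed.

Lemma is_derive_taylor V k m x : is_derive (taylor V k (S m)) x (taylor V (S k) m x).
Proof.
unfold taylor; induction m as [|m IH]; cbn [sum_f_R0].
- rewrite !Nat.add_0_r, Nat.add_1_r; simpl; auto_derive; auto; field.
- replace (k + S (S m))%nat with (S k + S m)%nat by lia.
  apply (is_derive_plus (fun x => sum_f_R0 _ m + _) _ x); [exact IH|].
  change (fact (S (S m))) with (S (S m) * fact (S m))%nat; rewrite mult_INR.
  assert (Hc := INR_fact_neq_0 (S m)); assert (Hm := pos_INR (S m)).
  set (c := INR (fact (S m))) in *; clearbody c.
  auto_derive; auto.
  replace (S k + S m)%nat with (S (k + S m)) by lia; simpl.
  change (match m with 0%nat => 1 | S _ => INR m + 1 end) with (INR (S m)); field; lra.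
Qed.

Section Taylor.

Variables (V : R -> R) (d : R).
Hypothesis Hd : 0 < d.
Hypothesis HD : forall k, (k <= 5)%nat -> forall x, Rabs x < d -> ex_derive_n V k x.
Hypothesis HD6 : ex_derive_n V 6 0.

Lemma taylor_littleo m : (1 <= m <= 6)%nat ->
  littleo m (fun x => Derive_n V (6 - m) x - taylor V (6 - m) m x).
Proof.
induction m as [|m IH]; [lia|]; intros Hm.
destruct (Nat.eq_dec m 0) as [->|Hm0].
- eapply littleo_ext; [|apply is_derive_littleo1, (Derive_correct (Derive_n V 5) 0 HD6)].
  intros x; cbn [taylor sum_f_R0 Nat.sub Nat.add Nat.mul fact INR pow].
  change (Derive_n V 6 0) with (Derive (Derive_n V 5) 0); field.
- replace (6 - m)%nat with (S (6 - S m)) in IH by lia.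
  apply (littleo_antiderivative m d _ (Derive_n V (S (6 - S m))) _ (taylor V (S (6 - S m)) m));
    auto.
  + intros x Hx; apply (Derive_correct (Derive_n V (6 - S m)) x), (HD (S (6 - S m))); auto; lia.
  + intros x; apply is_derive_taylor.
  + now rewrite taylor_at0.
  + apply IH; lia.
Qed.

End Taylor.

Lemma Rinv_close l q eps : l <> 0 -> 0 < eps ->
  Rabs (q - l) < Rmin (Rabs l / 2) (eps * Rabs l ^ 2 / 2) -> Rabs (/ q - / l) < eps.
Proof.
intros Hl Heps Hq.
assert (Hal : 0 < Rabs l) by now apply Rabs_pos_lt.
assert (Hq1 : Rabs (q - l) < Rabs l / 2) by (eapply Rlt_le_trans; [apply Hq|apply Rmin_l]).
assert (Hq2 : Rabs (q - l) < eps * (Rabs l * Rabs l) / 2)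
  by (eapply Rlt_le_trans; [apply Hq|]; simpl; rewrite Rmult_1_r; apply Rmin_r).
assert (Hqa : Rabs l / 2 < Rabs q).
{ pose proof (Rabs_triang_inv l (l - q)); replace (l - (l - q)) with q in H by ring.
  rewrite Rabs_minus_sym in Hq1; lra. }
assert (Hq0 : q <> 0) by (intros E; rewrite E, Rabs_R0 in Hqa; lra).
replace (/ q - / l) with ((l - q) / (q * l)) by (field; auto).
unfold Rdiv; rewrite Rabs_mult, Rabs_inv, Rabs_mult, Rabs_minus_sym.
apply Rmult_lt_reg_r with (Rabs q * Rabs l); [apply Rmult_lt_0_compat; lra|].
rewrite Rmult_assoc, Rinv_l, Rmult_1_r by (apply Rgt_not_eq, Rmult_lt_0_compat; lra).
assert (eps * (Rabs l * Rabs l) / 2 <= eps * (Rabs q * Rabs l))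
  by (unfold Rdiv; rewrite Rmult_assoc; apply Rmult_le_compat_l; nra).
lra.
Qed.

Lemma is_derive_inverse (f g : R -> R) y l e : 0 < e ->
  (forall z, Rabs (z - y) < e -> f (g z) = z) ->
  continuous g y -> is_derive f (g y) l -> l <> 0 -> is_derive g y (/ l).
Proof.
intros He Hfg Hc Hf Hl; apply is_derive_Reals; apply is_derive_Reals in Hf.
intros eps Heps.
assert (Hal : 0 < Rabs l) by now apply Rabs_pos_lt.
assert (He0 : 0 < Rmin (Rabs l / 2) (eps * Rabs l ^ 2 / 2)).
{ apply Rmin_pos; [lra|]; pose proof (pow_lt _ 2 Hal); apply Rmult_lt_0_compat; nra. }
destruct (Hf _ He0) as [eta Heta].
apply continuity_pt_filterlim in Hc.
destruct (Hc eta (cond_pos eta)) as [a [Ha Hga]].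
assert (Hd : 0 < Rmin e a) by now apply Rmin_pos.
exists (mkposreal _ Hd); intros h Hh0 Hh; simpl in Hh.
assert (Hhe : Rabs h < e) by (eapply Rlt_le_trans; [apply Hh|apply Rmin_l]).
assert (Hha : Rabs h < a) by (eapply Rlt_le_trans; [apply Hh|apply Rmin_r]).
set (k := g (y + h) - g y).
assert (E1 : f (g (y + h)) = y + h) by (apply Hfg; replace (y + h - y) with h by ring; auto).
assert (E2 : f (g y) = y) by (apply Hfg; rewrite Rminus_diag, Rabs_R0; auto).
assert (Hk0 : k <> 0).
{ intros Hk; unfold k in Hk; replace (g (y + h)) with (g y) in E1 by lra; lra. }
assert (Hk : Rabs k < eta).
{ apply (Hga (y + h)); repeat split; auto; [intros E; apply Hh0; lra|].
  simpl; unfold R_dist; now replace (y + h - y) with h by ring. }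
specialize (Heta k Hk0 Hk).
replace (g y + k) with (g (y + h)) in Heta by (unfold k; ring).
rewrite E1, E2 in Heta; replace (y + h - y) with h in Heta by ring.
replace (k / h) with (/ (h / k)) by (unfold k in *; field; auto).
now apply Rinv_close.
Qed.

(** * Periodic orbits parametrised by a square-root coordinate *)

(* [G] plays the inverse of the coordinate [s] with [V = s^2] ([HVG] is [V' = 2 s s'] read
   through [G]).  Then [x = G (r cos th)], [v = - sqrt 2 r sin th] runs along the energy level
   [V x + v^2 / 2 = r^2]; the phase [th] is the inverse of [time_of_phase]. *)
Section Orbit.

Variables (V G Gd : R -> R) (sig0 m r : R).
Hypothesis Hm : 0 < m.
Hypothesis HGder : forall sg, Rabs sg < sig0 -> is_derive G sg (Gd sg).
Hypothesis HGdc : forall sg, Rabs sg < sig0 -> continuous Gd sg.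
Hypothesis HGdlb : forall sg, Rabs sg < sig0 -> m <= Gd sg.
Hypothesis HVG : forall sg, Rabs sg < sig0 -> Derive V (G sg) = 2 * sg / Gd sg.
Hypothesis Hr : 0 < r < sig0.

Lemma G_increasing a b : Rabs a < sig0 -> Rabs b < sig0 -> a < b -> G a < G b.
Proof.
intros Ha Hb Hab.
assert (Hin : forall y, a <= y <= b -> Rabs y < sig0)
  by (intros y Hy; apply Rabs_def2 in Ha; apply Rabs_def2 in Hb; apply Rabs_def1; lra).
destruct (MVT_gen G a b Gd) as [c [Hc1 Hc2]].
- intros y Hy; rewrite Rmin_left, Rmax_right in Hy by lra; apply HGder, Hin; lra.
- intros y Hy; rewrite Rmin_left, Rmax_right in Hy by lra.
  apply continuity_pt_filterlim, (ex_derive_continuous G); eexists; apply HGder, Hin; lra.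
- rewrite Rmin_left, Rmax_right in Hc1 by lra.
  pose proof (HGdlb c (Hin c Hc1)); nra.
Qed.

Lemma abs_rcos_lt p : Rabs (r * cos p) < sig0.
Proof.
rewrite Rabs_mult, (Rabs_right r) by lra.
pose proof (COS_bound p); assert (Rabs (cos p) <= 1) by (apply Rabs_le; lra).
pose proof (Rabs_pos (cos p)); nra.
Qed.

Definition phase_speed p := / sqrt 2 * Gd (r * cos p).
Definition phase_speed_lb := / sqrt 2 * m.

Lemma phase_speed_lb_pos : 0 < phase_speed_lb.
Proof. apply Rmult_lt_0_compat; auto; apply Rinv_0_lt_compat, sqrt_lt_R0; lra. Qed.

Lemma phase_speed_ge p : phase_speed_lb <= phase_speed p.
Proof.
apply Rmult_le_compat_l; [apply Rlt_le, Rinv_0_lt_compat, sqrt_lt_R0; lra|].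
apply HGdlb, abs_rcos_lt.
Qed.

Lemma phase_speed_continuous p : continuous phase_speed p.
Proof.
apply (continuous_scal_r (/ sqrt 2) (fun p => Gd (r * cos p))).
apply (continuous_comp (fun p => r * cos p) Gd); [|apply HGdc, abs_rcos_lt].
apply (ex_derive_continuous (fun p => r * cos p)); auto_derive; auto.
Qed.

Lemma phase_speed_periodic p : phase_speed (p + 2 * PI) = phase_speed p.
Proof. unfold phase_speed; now rewrite cos_plus, cos_2PI, sin_2PI, Rmult_1_r, Rmult_0_r, Rminus_0_r. Qed.

Lemma ex_RInt_phase_speed a b : ex_RInt phase_speed a b.
Proof. apply (@ex_RInt_continuous R_CompleteNormedModule); intros; apply phase_speed_continuous. Qed.

Definition time_of_phase t := RInt phase_speed 0 t.
Definition period := time_of_phase (2 * PI).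

Lemma is_derive_time_of_phase t : is_derive time_of_phase t (phase_speed t).
Proof.
apply is_derive_RInt with 0; [|apply phase_speed_continuous].
apply filter_forall; intros b; apply RInt_correct, ex_RInt_phase_speed.
Qed.

Lemma time_of_phase_continuous t : continuity_pt time_of_phase t.
Proof.
apply continuity_pt_filterlim, (ex_derive_continuous time_of_phase).
eexists; apply is_derive_time_of_phase.
Qed.

Lemma time_of_phase_incr a b : a <= b ->
  phase_speed_lb * (b - a) <= time_of_phase b - time_of_phase a.
Proof.
intros Hab; destruct (Req_dec a b) as [->|Hne]; [lra|].
destruct (MVT_gen time_of_phase a b phase_speed) as [c [Hc1 Hc2]].
- intros; apply is_derive_time_of_phase.
- intros; apply time_of_phase_continuous.
- rewrite Hc2; pose proof (phase_speed_ge c); nra.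
Qed.

Lemma time_of_phase0 : time_of_phase 0 = 0.
Proof. apply (@RInt_point R_CompleteNormedModule). Qed.

Lemma time_of_phase_shift t : time_of_phase (t + 2 * PI) = time_of_phase t + period.
Proof.
unfold time_of_phase, period.
rewrite <- (RInt_Chasles phase_speed 0 (2 * PI) (t + 2 * PI)) by apply ex_RInt_phase_speed.
change (plus ?a ?b) with (a + b); rewrite Rplus_comm; f_equal.
replace (2 * PI) with (1 * 0 + 2 * PI) at 1 by ring.
replace (t + 2 * PI) with (1 * t + 2 * PI) by ring.
rewrite <- RInt_comp_lin by apply ex_RInt_phase_speed.
apply RInt_ext; intros x _; change (scal 1 ?y) with (1 * y).
now rewrite !Rmult_1_l, phase_speed_periodic.
Qed.

Lemma time_of_phase_inj a b : time_of_phase a = time_of_phase b -> a = b.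
Proof.
intros E; pose proof phase_speed_lb_pos.
destruct (Rtotal_order a b) as [Hl|[Hl|Hl]]; auto.
- pose proof (time_of_phase_incr a b ltac:(lra)); nra.
- pose proof (time_of_phase_incr b a ltac:(lra)); nra.
Qed.

Lemma time_of_phase_surj t : exists p, time_of_phase p = t.
Proof.
pose proof phase_speed_lb_pos; set (R0 := Rabs t / phase_speed_lb).
assert (HR0 : 0 <= R0) by (apply Rmult_le_pos; [apply Rabs_pos|apply Rlt_le, Rinv_0_lt_compat; lra]).
destruct (IVT_gen time_of_phase (- R0) R0 t) as [x [_ Hx]];
  [intros y; apply time_of_phase_continuous| |now exists x].
pose proof (time_of_phase_incr 0 R0 ltac:(lra)) as H0.
pose proof (time_of_phase_incr (- R0) 0 ltac:(lra)) as H1.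
rewrite time_of_phase0 in *; unfold R0 in *.
replace (phase_speed_lb * (Rabs t / phase_speed_lb - 0)) with (Rabs t) in H0 by (field; lra).
replace (phase_speed_lb * (0 - - (Rabs t / phase_speed_lb))) with (Rabs t) in H1 by (field; lra).
pose proof (Rle_abs t); pose proof (Rle_abs (- t)); rewrite Rabs_Ropp in *.
rewrite Rmin_left, Rmax_right by lra; lra.
Qed.

Definition phase t := proj1_sig (constructive_indefinite_description _ (time_of_phase_surj t)).

Lemma time_of_phaseK t : time_of_phase (phase t) = t.
Proof. exact (proj2_sig (constructive_indefinite_description _ (time_of_phase_surj t))). Qed.

Lemma phase_lipschitz a b : Rabs (phase a - phase b) <= Rabs (a - b) / phase_speed_lb.
Proof.
pose proof phase_speed_lb_pos.
apply Rmult_le_reg_l with phase_speed_lb; auto.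
replace (phase_speed_lb * (Rabs (a - b) / phase_speed_lb)) with (Rabs (a - b)) by (field; lra).
rewrite <- (Rabs_right phase_speed_lb) at 1 by lra; rewrite <- Rabs_mult.
destruct (Rle_dec (phase a) (phase b)) as [Hle|Hlt].
- pose proof (time_of_phase_incr _ _ Hle) as H0; rewrite !time_of_phaseK in H0.
  rewrite (Rabs_left1 (phase_speed_lb * _)), (Rabs_left1 (a - b)); nra.
- pose proof (time_of_phase_incr (phase b) (phase a) ltac:(lra)) as H0.
  rewrite !time_of_phaseK in H0.
  rewrite (Rabs_right (phase_speed_lb * _)), (Rabs_right (a - b)); nra.
Qed.

Lemma phase_continuous t : continuous phase t.
Proof.
apply continuity_pt_filterlim; intros eps He; pose proof phase_speed_lb_pos.
exists (eps * phase_speed_lb); split; [nra|]; intros x [_ Hx].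
simpl in Hx |- *; unfold R_dist in Hx |- *.
eapply Rle_lt_trans; [apply phase_lipschitz|].
apply Rmult_lt_reg_r with phase_speed_lb; auto.
unfold Rdiv; rewrite Rmult_assoc, Rinv_l, Rmult_1_r by lra; auto.
Qed.

Lemma is_derive_phase t : is_derive phase t (/ phase_speed (phase t)).
Proof.
apply (is_derive_inverse time_of_phase phase t _ 1); [lra| |apply phase_continuous|
  apply is_derive_time_of_phase|].
- intros; apply time_of_phaseK.
- pose proof (phase_speed_ge (phase t)); pose proof phase_speed_lb_pos; lra.
Qed.

Lemma phase0 : phase 0 = 0.
Proof. apply time_of_phase_inj; now rewrite time_of_phaseK, time_of_phase0. Qed.

Lemma phase_shift t : phase (t + period) = phase t + 2 * PI.
Proof. apply time_of_phase_inj; now rewrite time_of_phaseK, time_of_phase_shift, time_of_phaseK. Qed.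

Lemma period_pos : 0 < period.
Proof.
pose proof (time_of_phase_incr 0 (2 * PI) ltac:(pose proof PI_RGT_0; lra)).
rewrite time_of_phase0 in H; unfold period; pose proof phase_speed_lb_pos; pose proof PI_RGT_0; nra.
Qed.

Lemma phase_within_turn S : 0 < S < period -> 0 < phase S < 2 * PI.
Proof.
intros HS; pose proof phase_speed_lb_pos; split.
- destruct (Rlt_dec 0 (phase S)) as [|Hn]; auto.
  pose proof (time_of_phase_incr (phase S) 0 ltac:(lra)).
  rewrite time_of_phaseK, time_of_phase0 in H0; nra.
- destruct (Rlt_dec (phase S) (2 * PI)) as [|Hn]; auto.
  pose proof (time_of_phase_incr (2 * PI) (phase S) ltac:(lra)).
  rewrite time_of_phaseK in H0; fold period in H0; nra.
Qed.

Definition orbit_x t := G (r * cos (phase t)).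
Definition orbit_v t := - sqrt 2 * r * sin (phase t).

Lemma orbit_is_solution : is_solution V (G r) orbit_x orbit_v.
Proof.
assert (Hs2 : 0 < sqrt 2) by (apply sqrt_lt_R0; lra).
assert (HGd : forall t, 0 < Gd (r * cos (phase t)))
  by (intros t; pose proof (HGdlb _ (abs_rcos_lt (phase t))); lra).
split; [|split; [|split]].
- intros t; unfold orbit_x, orbit_v.
  assert (H1 := is_derive_comp cos phase t _ _ (is_derive_cos (phase t)) (is_derive_phase t)).
  assert (H2 := is_derive_scal _ t r _ H1).
  assert (H3 := is_derive_comp G _ t _ _ (HGder _ (abs_rcos_lt (phase t))) H2).
  replace (- sqrt 2 * r * sin (phase t)) with
    (scal (r * scal (/ phase_speed (phase t)) (- sin (phase t))) (Gd (r * cos (phase t))));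
    [exact H3|].
  unfold scal; simpl; unfold mult; simpl; unfold phase_speed; pose proof (HGd t); field; lra.
- intros t; unfold orbit_x, orbit_v; rewrite HVG by apply abs_rcos_lt.
  assert (H1 := is_derive_comp sin phase t _ _ (is_derive_sin (phase t)) (is_derive_phase t)).
  assert (H2 := is_derive_scal _ t (- sqrt 2 * r) _ H1).
  replace (- (2 * (r * cos (phase t)) / Gd (r * cos (phase t))))
    with (- sqrt 2 * r * scal (/ phase_speed (phase t)) (cos (phase t))); [exact H2|].
  unfold scal; simpl; unfold mult; simpl; unfold phase_speed; pose proof (HGd t).
  rewrite <- (sqrt_sqrt 2) at 3 by lra; field; lra.
- unfold orbit_x; now rewrite phase0, cos_0, Rmult_1_r.
- unfold orbit_v; rewrite phase0, sin_0; ring.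
Qed.

Lemma cos_lt_1 x : 0 < x < 2 * PI -> cos x < 1.
Proof.
intros H; replace x with (2 * (x / 2)) by field; rewrite cos_2a_sin.
assert (0 < sin (x / 2)) by (apply sin_gt_0; lra); nra.
Qed.

Lemma orbit_minimal_period T : minimal_period orbit_x T -> T = period.
Proof.
intros [HT [Hper Hmin]]; pose proof period_pos.
assert (Hshift : forall t, orbit_x (t + period) = orbit_x t).
{ intros t; unfold orbit_x; rewrite phase_shift, cos_plus, cos_2PI, sin_2PI; f_equal; ring. }
assert (Hnot : forall S, 0 < S < period -> orbit_x (0 + S) <> orbit_x 0).
{ intros S HS; rewrite Rplus_0_l; unfold orbit_x; rewrite phase0, cos_0, Rmult_1_r.
  assert (Hlt : r * cos (phase S) < r) by (pose proof (cos_lt_1 _ (phase_within_turn S HS)); nra).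
  apply Rlt_not_eq, G_increasing; auto using abs_rcos_lt; rewrite Rabs_right; lra. }
destruct (Rtotal_order T period) as [Hl|[Hl|Hl]]; auto; exfalso.
- apply (Hnot T); [lra|apply Hper].
- destruct (Hmin period ltac:(lra)) as [t Ht]; apply Ht, Hshift.
Qed.

End Orbit.

(** * Isochrony kills the even coefficients of [G'] *)

Definition jet_cos_primitive (a : jet) (r p : R) : R :=
  c0 a * p + c1 a * r * sin p + c2 a * r ^ 2 * ((p + sin p * cos p) / 2)
  + c3 a * r ^ 3 * (sin p - sin p ^ 3 / 3)
  + c4 a * r ^ 4 * (3 * p / 8 + 3 * sin p * cos p / 8 + cos p ^ 3 * sin p / 4)
  + c5 a * r ^ 5 * (sin p - 2 * sin p ^ 3 / 3 + sin p ^ 5 / 5).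

Lemma is_derive_jet_cos_primitive a r p :
  is_derive (jet_cos_primitive a r) p (jet_eval a (r * cos p)).
Proof.
unfold jet_cos_primitive; auto_derive; auto.
assert (E : sin p ^ 2 + cos p ^ 2 = 1) by (rewrite <- (sin2_cos2 p); unfold Rsqr; ring).
apply Rminus_diag_uniq; unfold jet_eval.
transitivity ((1 - sin p ^ 2 - cos p ^ 2) * (c2 a * r ^ 2 / 2 + c3 a * r ^ 3 * cos p
  + c4 a * r ^ 4 * (3 / 8 + 3 * cos p ^ 2 / 4) + c5 a * r ^ 5 * cos p * (1 + cos p ^ 2 - sin p ^ 2))).
- field.
- replace (1 - sin p ^ 2 - cos p ^ 2) with 0 by lra; ring.
Qed.

Lemma ex_RInt_jet_eval_cos a r : ex_RInt (fun p => jet_eval a (r * cos p)) 0 (2 * PI).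
Proof.
apply (@ex_RInt_continuous R_CompleteNormedModule); intros p _.
apply (ex_derive_continuous (fun p => jet_eval a (r * cos p))); unfold jet_eval; auto_derive; auto.
Qed.

Lemma RInt_jet_eval_cos a r :
  RInt (fun p => jet_eval a (r * cos p)) 0 (2 * PI)
  = 2 * PI * c0 a + PI * c2 a * r ^ 2 + 3 * PI / 4 * c4 a * r ^ 4.
Proof.
apply is_RInt_unique.
replace (2 * PI * c0 a + PI * c2 a * r ^ 2 + 3 * PI / 4 * c4 a * r ^ 4)
  with (minus (jet_cos_primitive a r (2 * PI)) (jet_cos_primitive a r 0)).
- apply (is_RInt_derive (jet_cos_primitive a r)); intros p _; [apply is_derive_jet_cos_primitive|].
  apply (ex_derive_continuous (fun p => jet_eval a (r * cos p))); unfold jet_eval; auto_derive; auto.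
- unfold minus, plus, opp; simpl; unfold jet_cos_primitive.
  rewrite sin_2PI, cos_2PI, sin_0, cos_0; field.
Qed.

Lemma eq0_of_vanishing_right a h : bounded_near0 h ->
  (forall eps, 0 < eps -> exists rho, 0 < rho /\ forall r, 0 < r < rho -> Rabs (a + r * h r) <= eps) ->
  a = 0.
Proof.
intros [M [d [Hd HM]]] H; apply Req_le_aux; intros [eps He]; simpl; rewrite Rminus_0_r.
destruct (H (eps / 2)) as [rho [Hrho Hr]]; [lra|].
assert (HM1 : 0 < Rabs M + 1) by (pose proof (Rabs_pos M); lra).
set (r0 := Rmin (Rmin rho d) (eps / 2 / (Rabs M + 1))).
assert (Hr0 : 0 < r0) by (unfold r0; repeat apply Rmin_pos; try lra; apply Rdiv_lt_0_compat; lra).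
assert (Hr1 : r0 <= Rmin rho d) by apply Rmin_l.
assert (Hr2 : r0 * (Rabs M + 1) <= eps / 2).
{ assert (r0 <= eps / 2 / (Rabs M + 1)) by apply Rmin_r.
  apply Rmult_le_reg_r with (/ (Rabs M + 1)); [now apply Rinv_0_lt_compat|].
  rewrite Rmult_assoc, Rinv_r, Rmult_1_r by lra; lra. }
set (r := r0 / 2).
pose proof (Rmin_l rho d); pose proof (Rmin_r rho d).
specialize (Hr r ltac:(unfold r; lra)); specialize (HM r ltac:(unfold r; rewrite Rabs_right; lra)).
replace a with ((a + r * h r) - r * h r) by ring.
eapply Rle_trans; [apply Rabs_triang|]; rewrite Rabs_Ropp, Rabs_mult, (Rabs_right r) by (unfold r; lra).
assert (Rabs (h r) <= Rabs M + 1) by (pose proof (Rle_abs M); lra).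
assert (r * Rabs (h r) <= r0 * (Rabs M + 1))
  by (apply Rmult_le_compat; [unfold r; lra|apply Rabs_pos|unfold r; lra|auto]).
lra.
Qed.

Lemma even_poly_coeffs_eq0 a b c :
  (forall eps, 0 < eps -> exists rho, 0 < rho /\ forall r, 0 < r < rho ->
     Rabs (a - b * r ^ 2 - c * r ^ 4) <= eps * r ^ 4) ->
  a = 0 /\ b = 0 /\ c = 0.
Proof.
intros H.
assert (Hsmall : forall eps, 0 < eps -> exists rho, 0 < rho /\ forall r, 0 < r < rho ->
  r <= 1 /\ Rabs (a - b * r ^ 2 - c * r ^ 4) <= eps * r ^ 4).
{ intros eps He; destruct (H eps He) as [rho [Hrho Hr]].
  exists (Rmin rho 1); split; [apply Rmin_pos; lra|]; intros r Hr'.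
  pose proof (Rmin_l rho 1); pose proof (Rmin_r rho 1); split; [lra|apply Hr; lra]. }
assert (Ha : a = 0).
{ apply (eq0_of_vanishing_right a (fun r => - b * r - c * r ^ 3)).
  - apply continuous_bounded_near0, (ex_derive_continuous (fun r => - b * r - c * r ^ 3)); auto_derive; auto.
  - intros eps He; destruct (Hsmall eps He) as [rho [Hrho Hr]]; exists rho; split; auto.
    intros r Hr0; destruct (Hr r Hr0) as [Hr1 Hb].
    replace (a + r * (- b * r - c * r ^ 3)) with (a - b * r ^ 2 - c * r ^ 4) by ring.
    assert (r ^ 4 <= 1) by (rewrite <- (pow1 4); apply pow_incr; lra); nra. }
subst a.
assert (Hb : - b = 0).
{ apply (eq0_of_vanishing_right (- b) (fun r => - c * r)).
  - apply continuous_bounded_near0, (ex_derive_continuous (fun r => - c * r)); auto_derive; auto.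
  - intros eps He; destruct (Hsmall eps He) as [rho [Hrho Hr]]; exists rho; split; auto.
    intros r Hr0; destruct (Hr r Hr0) as [Hr1 Hb].
    replace (0 - b * r ^ 2 - c * r ^ 4) with (r ^ 2 * (- b + r * (- c * r))) in Hb by ring.
    rewrite Rabs_mult, (Rabs_right (r ^ 2)) in Hb by (apply Rle_ge, pow2_ge_0).
    assert (0 < r ^ 2) by (apply pow_lt; lra).
    assert (Rabs (- b + r * (- c * r)) <= eps * r ^ 2)
      by (apply Rmult_le_reg_l with (r ^ 2); auto; replace (r ^ 2 * (eps * r ^ 2)) with (eps * r ^ 4) by ring; auto).
    assert (r ^ 2 <= 1) by (rewrite <- (pow1 2); apply pow_incr; lra); nra. }
replace b with 0 in * by lra; repeat split; auto.
cut (- c = 0); [lra|].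
apply (eq0_of_vanishing_right (- c) (fun _ => 0)); [apply bounded_near0_const|].
intros eps He; destruct (Hsmall eps He) as [rho [Hrho Hr]]; exists rho; split; auto.
intros r Hr0; destruct (Hr r Hr0) as [Hr1 Hc].
replace (0 - 0 * r ^ 2 - c * r ^ 4) with (r ^ 4 * (- c + r * 0)) in Hc by ring.
rewrite Rabs_mult, (Rabs_right (r ^ 4)) in Hc by (apply Rle_ge, pow_le; lra).
assert (0 < r ^ 4) by (apply pow_lt; lra); nra.
Qed.

Section Isochrony.

Variables (V G Gd : R -> R) (sig0 m alpha beta : R) (a : jet).
Hypothesis Hsig0 : 0 < sig0.
Hypothesis Hm : 0 < m.
Hypothesis HGder : forall sg, Rabs sg < sig0 -> is_derive G sg (Gd sg).
Hypothesis HGdc : forall sg, Rabs sg < sig0 -> continuous Gd sg.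
Hypothesis HGdlb : forall sg, Rabs sg < sig0 -> m <= Gd sg.
Hypothesis HVG : forall sg, Rabs sg < sig0 -> Derive V (G sg) = 2 * sg / Gd sg.
Hypothesis HG0 : G 0 = 0.
Hypothesis HGd_jet : has_jet 4 Gd a.
Hypothesis Hab : alpha < 0 < beta.
Hypothesis Hiso : isochronous_center V alpha beta.

Lemma ex_RInt_Gd_cos r : 0 < r < sig0 -> ex_RInt (fun p => Gd (r * cos p)) 0 (2 * PI).
Proof.
intros Hr; apply (@ex_RInt_continuous R_CompleteNormedModule); intros p _.
apply (continuous_comp (fun p => r * cos p) Gd); [|now apply HGdc, abs_rcos_lt].
apply (ex_derive_continuous (fun p => r * cos p)); auto_derive; auto.
Qed.

Lemma period_RInt r : 0 < r < sig0 ->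
  period Gd r = / sqrt 2 * RInt (fun p => Gd (r * cos p)) 0 (2 * PI).
Proof.
intros Hr; unfold period, time_of_phase, phase_speed.
apply (RInt_scal (V := R_CompleteNormedModule) (fun p => Gd (r * cos p))), ex_RInt_Gd_cos; auto.
Qed.

Lemma period_locally_constant : exists T rho, 0 < rho /\ forall r, 0 < r < rho -> period Gd r = T.
Proof.
destruct Hiso as [T [HT Hall]].
assert (HGc : continuous G 0)
  by (apply (ex_derive_continuous G); eexists; apply HGder; rewrite Rabs_R0; auto).
destruct (continuous_littleo0 G HGc (beta / 2) ltac:(lra)) as [rho [Hrho HGb]].
exists T, (Rmin sig0 rho); split; [now apply Rmin_pos|]; intros r Hr.
pose proof (Rmin_l sig0 rho); pose proof (Rmin_r sig0 rho).
assert (Hr' : 0 < r < sig0) by lra.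
assert (HGr : 0 < G r < beta).
{ split.
  - rewrite <- HG0; apply (G_increasing G Gd sig0 m); auto; rewrite ?Rabs_R0, ?Rabs_right; lra.
  - specialize (HGb r ltac:(rewrite Rabs_right; lra)); simpl in HGb.
    rewrite HG0, Rminus_0_r, Rmult_1_r in HGb; pose proof (Rle_abs (G r)); lra. }
destruct (Hall (G r) ltac:(unfold in_J; lra) ltac:(lra)) as [_ Hmin].
symmetry; apply (orbit_minimal_period G Gd sig0 m r Hm HGder HGdc HGdlb Hr').
apply Hmin with (orbit_v Gd sig0 m r Hm HGdc HGdlb Hr'), orbit_is_solution; auto.
Qed.

Lemma Gd_jet_even_coeffs_eq0 : c2 a = 0 /\ c4 a = 0.
Proof.
destruct period_locally_constant as [T [rho0 [Hrho0 HT]]]; pose proof PI_RGT_0.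
cut (sqrt 2 * T - 2 * PI * c0 a = 0 /\ PI * c2 a = 0 /\ 3 * PI / 4 * c4 a = 0).
{ intros [_ [H2 H4]]; split; nra. }
apply even_poly_coeffs_eq0; intros eps He.
destruct (HGd_jet (eps / (2 * PI))) as [d [Hd Hb]]; [apply Rdiv_lt_0_compat; lra|].
exists (Rmin rho0 (Rmin d sig0)); split; [repeat apply Rmin_pos; auto|]; intros r Hr.
pose proof (Rmin_l rho0 (Rmin d sig0)); pose proof (Rmin_r rho0 (Rmin d sig0)).
pose proof (Rmin_l d sig0); pose proof (Rmin_r d sig0).
assert (Hrr : 0 < r < sig0) by lra.
assert (HI : RInt (fun p => Gd (r * cos p)) 0 (2 * PI) = sqrt 2 * T).
{ rewrite <- (HT r ltac:(lra)), period_RInt, <- Rmult_assoc, Rinv_r, Rmult_1_l; auto.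
  apply Rgt_not_eq, sqrt_lt_R0; lra. }
assert (HR := RInt_minus (V := R_CompleteNormedModule) (fun p => Gd (r * cos p))
  (fun p => jet_eval a (r * cos p)) 0 (2 * PI) (ex_RInt_Gd_cos r Hrr) (ex_RInt_jet_eval_cos a r)).
rewrite RInt_jet_eval_cos, HI in HR; change (minus ?x ?y) with (x - y) in HR.
replace (sqrt 2 * T - 2 * PI * c0 a - PI * c2 a * r ^ 2 - 3 * PI / 4 * c4 a * r ^ 4)
  with (sqrt 2 * T - (2 * PI * c0 a + PI * c2 a * r ^ 2 + 3 * PI / 4 * c4 a * r ^ 4)) by ring.
rewrite <- HR.
eapply Rle_trans.
- apply (abs_RInt_le_const _ 0 (2 * PI) (eps / (2 * PI) * r ^ 4)); [lra| |].
  + apply (@ex_RInt_minus R_NormedModule); [now apply ex_RInt_Gd_cos|apply ex_RInt_jet_eval_cos].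
  + intros p _; change (minus ?x ?y) with (x - y).
    assert (Hc : Rabs (r * cos p) <= r).
    { rewrite Rabs_mult, (Rabs_right r) by lra; pose proof (COS_bound p).
      assert (Rabs (cos p) <= 1) by (apply Rabs_le; lra); pose proof (Rabs_pos (cos p)); nra. }
    eapply Rle_trans; [apply Hb; lra|].
    apply Rmult_le_compat_l; [apply Rlt_le, Rdiv_lt_0_compat; lra|].
    apply pow_incr; split; [apply Rabs_pos|auto].
- right; field; lra.
Qed.

End Isochrony.

(** * The square-root coordinate [s] with [V = s ^ 2] and its inverse *)

Section SqrtCoordinate.

Variables (V : R -> R) (d : R).
Hypothesis Hd : 0 < d.
Hypothesis HD : forall k, (k <= 5)%nat -> forall x, Rabs x < d -> ex_derive_n V k x.
Hypothesis HD6 : ex_derive_n V 6 0.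
Hypothesis HV0 : V 0 = 0.
Hypothesis HV1 : Derive V 0 = 0.
Hypothesis HV2 : 0 < Derive_n V 2 0.

(* The coefficients are chosen so that [(s1 x + ... + s5 x^5)^2] is the Taylor polynomial of
   [V] of degree six, up to terms of degree seven and more. *)
Definition s1 := sqrt (Derive_n V 2 0 / 2).
Definition s2 := Derive_n V 3 0 / (12 * s1).
Definition s3 := (Derive_n V 4 0 / 24 - s2 ^ 2) / (2 * s1).
Definition s4 := (Derive_n V 5 0 / 120 - 2 * s2 * s3) / (2 * s1).
Definition s5 := (Derive_n V 6 0 / 720 - 2 * s2 * s4 - s3 ^ 2) / (2 * s1).

Definition sqrt_jet := mkjet 0 s1 s2 s3 s4 s5.

Lemma s1_pos : 0 < s1.
Proof. apply sqrt_lt_R0; lra. Qed.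

Lemma Derive_n_V_coeffs :
  Derive_n V 2 0 = 2 * s1 ^ 2 /\ Derive_n V 3 0 = 12 * s1 * s2 /\
  Derive_n V 4 0 = 24 * (2 * s1 * s3 + s2 ^ 2) /\
  Derive_n V 5 0 = 120 * (2 * s1 * s4 + 2 * s2 * s3) /\
  Derive_n V 6 0 = 720 * (2 * s1 * s5 + 2 * s2 * s4 + s3 ^ 2).
Proof.
pose proof s1_pos; split; [unfold s1; cbn [pow]; rewrite Rmult_1_r, sqrt_sqrt; lra|].
repeat split; [unfold s2|unfold s3|unfold s4|unfold s5]; field; lra.
Qed.

Lemma V_sqrt_jet : littleo 6 (fun x => V x - jet_eval sqrt_jet x ^ 2).
Proof.
destruct Derive_n_V_coeffs as [E2 [E3 [E4 [E5 E6]]]].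
apply littleo_ext with (fun x => (V x - taylor V 0 6 x) + - (x ^ 7 * (2 * s2 * s5 + 2 * s3 * s4
  + (2 * s3 * s5 + s4 ^ 2) * x + 2 * s4 * s5 * x ^ 2 + s5 ^ 2 * x ^ 3))).
{ intros x; replace (taylor V 0 6 x) with (V 0 + Derive_n V 1 0 * x + Derive_n V 2 0 * x ^ 2 / 2
    + Derive_n V 3 0 * x ^ 3 / 6 + Derive_n V 4 0 * x ^ 4 / 24 + Derive_n V 5 0 * x ^ 5 / 120
    + Derive_n V 6 0 * x ^ 6 / 720) by (unfold taylor; simpl; field).
  change (Derive_n V 1 0) with (Derive V 0).
  rewrite HV0, HV1, E2, E3, E4, E5, E6; unfold jet_eval, sqrt_jet; cbn [c0 c1 c2 c3 c4 c5]; field. }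
apply littleo_plus; [exact (taylor_littleo V d Hd HD HD6 6 ltac:(lia))|].
apply littleo_opp, littleo_pow_mult.
apply (ex_derive_continuous (fun x => _ + _ * x + _ * x ^ 2 + _ * x ^ 3)); auto_derive; auto.
Qed.

Lemma DV_sqrt_jet :
  littleo 5 (fun x => Derive V x - 2 * jet_eval sqrt_jet x * jet_eval (jet_deriv sqrt_jet) x).
Proof.
destruct Derive_n_V_coeffs as [E2 [E3 [E4 [E5 E6]]]].
apply littleo_ext with (fun x => (Derive V x - taylor V 1 5 x) + - (x ^ 6 * (14 * s2 * s5
  + 14 * s3 * s4 + 8 * (2 * s3 * s5 + s4 ^ 2) * x + 18 * s4 * s5 * x ^ 2 + 10 * s5 ^ 2 * x ^ 3))).
{ intros x; replace (taylor V 1 5 x) with (Derive_n V 1 0 + Derive_n V 2 0 * x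
    + Derive_n V 3 0 * x ^ 2 / 2 + Derive_n V 4 0 * x ^ 3 / 6 + Derive_n V 5 0 * x ^ 4 / 24
    + Derive_n V 6 0 * x ^ 5 / 120) by (unfold taylor; simpl; field).
  change (Derive_n V 1 0) with (Derive V 0).
  rewrite HV1, E2, E3, E4, E5, E6; unfold jet_eval, jet_deriv, sqrt_jet; cbn [c0 c1 c2 c3 c4 c5]; field. }
apply littleo_plus; [exact (taylor_littleo V d Hd HD HD6 5 ltac:(lia))|].
apply littleo_opp, littleo_pow_mult.
apply (ex_derive_continuous (fun x => _ + _ * x + _ * x ^ 2 + _ * x ^ 3)); auto_derive; auto.
Qed.

Definition sqrt_jet_quot x := s1 + s2 * x + s3 * x ^ 2 + s4 * x ^ 3 + s5 * x ^ 4.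

Lemma sqrt_jet_eval x : jet_eval sqrt_jet x = x * sqrt_jet_quot x.
Proof. unfold jet_eval, sqrt_jet_quot, sqrt_jet; simpl; ring. Qed.

Lemma near0_bounds : near0 (fun x => Rabs x < d /\
  s1 / 2 <= sqrt_jet_quot x /\ s1 ^ 2 / 9 * x ^ 2 <= V x /\
  Rabs (jet_eval (jet_deriv sqrt_jet) x - s1) <= s1 / 4).
Proof.
pose proof s1_pos as Hs1.
assert (Hq : continuous sqrt_jet_quot 0)
  by (apply (ex_derive_continuous sqrt_jet_quot); unfold sqrt_jet_quot; auto_derive; auto).
assert (Hx1 : near0 (fun x => Rabs x < Rmin 1 (s1 / 3))) by (apply near0_abs_lt, Rmin_pos; lra).
assert (Hq0 : near0 (fun x => Rabs (sqrt_jet_quot x - sqrt_jet_quot 0) <= s1 / 2 * Rabs x ^ 0))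
  by (apply continuous_littleo0; auto; lra).
assert (HS0 : near0 (fun x => Rabs (jet_eval (jet_deriv sqrt_jet) x
    - jet_eval (jet_deriv sqrt_jet) 0) <= s1 / 4 * Rabs x ^ 0))
  by (apply continuous_littleo0; [apply jet_eval_continuous|lra]).
assert (HV : near0 (fun x => Rabs (V x - jet_eval sqrt_jet x ^ 2) <= 1 * Rabs x ^ 6))
  by exact (V_sqrt_jet 1 Rlt_0_1).
generalize (near0_and _ _ (near0_abs_lt d Hd) (near0_and _ _ Hx1
  (near0_and _ _ Hq0 (near0_and _ _ HS0 HV)))); apply near0_impl.
intros x [Hx [Hxm [H1 [H2 H3]]]]; cbv beta in *.
pose proof (Rmin_l 1 (s1 / 3)); pose proof (Rmin_r 1 (s1 / 3)).
simpl in H1, H2; rewrite Rmult_1_r in H1, H2.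
replace (sqrt_jet_quot 0) with s1 in H1 by (unfold sqrt_jet_quot; ring).
replace (jet_eval (jet_deriv sqrt_jet) 0) with s1 in H2 by (unfold jet_eval; simpl; ring).
assert (Hqx : s1 / 2 <= sqrt_jet_quot x) by (apply Rabs_le_between' in H1; lra).
repeat split; auto.
(* [V x >= (x q(x))^2 - x^6 >= x^2 s1^2/4 - x^2 s1^2/9] for [|x| <= min (1, s1/3)] *)
rewrite sqrt_jet_eval, Rmult_1_l in H3.
assert (Hx2 : x ^ 2 = Rabs x ^ 2) by now rewrite pow2_abs.
assert (Hsq : x ^ 2 <= s1 ^ 2 / 9) by (rewrite Hx2; pose proof (Rabs_pos x); simpl; nra).
assert (Hx6 : Rabs x ^ 6 <= x ^ 2 * (s1 ^ 2 / 9)).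
{ rewrite Hx2; replace (Rabs x ^ 6) with (Rabs x ^ 2 * (Rabs x ^ 2 * Rabs x ^ 2)) by ring.
  apply Rmult_le_compat_l; [apply pow_le, Rabs_pos|]; rewrite <- Hx2.
  assert (x ^ 2 <= 1) by (rewrite Hx2; pose proof (Rabs_pos x); simpl; nra).
  pose proof (pow2_ge_0 x); nra. }
assert (Hq2 : x ^ 2 * (s1 ^ 2 / 4) <= (x * sqrt_jet_quot x) ^ 2).
{ rewrite Rpow_mult_distr; apply Rmult_le_compat_l; [apply pow2_ge_0|simpl; nra]. }
apply Rabs_le_between' in H3; nra.
Qed.

Variable d1 : R.
Hypothesis Hd1 : 0 < d1.
Hypothesis Hbounds : forall x, Rabs x < d1 -> Rabs x < d /\
  s1 / 2 <= sqrt_jet_quot x /\ s1 ^ 2 / 9 * x ^ 2 <= V x /\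
  Rabs (jet_eval (jet_deriv sqrt_jet) x - s1) <= s1 / 4.

Definition sqrt_coord x := if Rle_dec 0 x then sqrt (V x) else - sqrt (V x).

Lemma V_pos x : Rabs x < d1 -> x <> 0 -> 0 < V x.
Proof.
intros Hx Hx0; destruct (Hbounds x Hx) as [_ [_ [H _]]]; pose proof s1_pos.
assert (0 < x ^ 2) by now apply pow2_gt_0.
assert (0 < s1 ^ 2 / 9 * x ^ 2) by (apply Rmult_lt_0_compat; [nra|auto]); lra.
Qed.

Lemma V_nonneg x : Rabs x < d1 -> 0 <= V x.
Proof. intros Hx; destruct (Req_dec x 0) as [->|Hx0]; [lra|now apply Rlt_le, V_pos]. Qed.

Lemma sqrt_coord_sq x : Rabs x < d1 -> sqrt_coord x * sqrt_coord x = V x.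
Proof.
intros Hx; unfold sqrt_coord; destruct (Rle_dec 0 x); [|rewrite Rmult_opp_opp];
  apply sqrt_sqrt, V_nonneg; auto.
Qed.

Lemma sqrt_coord0 : sqrt_coord 0 = 0.
Proof. unfold sqrt_coord; destruct (Rle_dec 0 0); [rewrite HV0; apply sqrt_0|lra]. Qed.

Lemma sqrt_coord_abs_ge x : Rabs x < d1 -> s1 / 3 * Rabs x <= Rabs (sqrt_coord x).
Proof.
intros Hx; destruct (Hbounds x Hx) as [_ [_ [H _]]]; pose proof s1_pos.
assert (E : Rabs (sqrt_coord x) * Rabs (sqrt_coord x) = V x)
  by (rewrite <- Rabs_mult, sqrt_coord_sq; auto; apply Rabs_right, Rle_ge, V_nonneg; auto).
rewrite <- E, <- (pow2_abs x) in H.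
apply Rsqr_incr_0_var; [|apply Rabs_pos]; unfold Rsqr.
replace (s1 / 3 * Rabs x * (s1 / 3 * Rabs x)) with (s1 ^ 2 / 9 * Rabs x ^ 2) by (simpl; field); exact H.
Qed.

Lemma sqrt_coord_neq0 x : Rabs x < d1 -> x <> 0 -> sqrt_coord x <> 0.
Proof.
intros Hx Hx0 E; pose proof (sqrt_coord_abs_ge x Hx); rewrite E, Rabs_R0 in H.
pose proof s1_pos; pose proof (Rabs_pos_lt x Hx0); nra.
Qed.

(* [sqrt_coord - S = (V - S^2) / (sqrt_coord + S)], where [sqrt_coord] and [S] have the sign of [x]. *)
Lemma sqrt_coord_jet : has_jet 5 sqrt_coord sqrt_jet.
Proof.
pose proof s1_pos as Hs1.
apply (littleo_div 5 (fun x => V x - jet_eval sqrt_jet x ^ 2)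
  (fun x => sqrt_coord x + jet_eval sqrt_jet x)); [exact V_sqrt_jet| |].
- rewrite sqrt_coord0; unfold jet_eval, sqrt_jet; simpl; ring.
- exists (s1 / 2); split; [lra|]; exists d1; split; auto; intros x Hx Hx0; split.
  + destruct (Hbounds x Hx) as [_ [Hq _]].
    rewrite sqrt_jet_eval; unfold sqrt_coord; destruct (Rle_dec 0 x).
    * pose proof (sqrt_pos (V x)).
      rewrite !Rabs_right by (apply Rle_ge; nra); nra.
    * pose proof (sqrt_pos (V x)).
      rewrite (Rabs_left1 x), (Rabs_left1 (_ + _)) by nra; nra.
  + simpl; rewrite <- (sqrt_coord_sq x Hx); ring.
Qed.

Lemma is_derive_sqrt_coord0 : is_derive sqrt_coord 0 s1.
Proof.
apply littleo1_is_derive; [apply sqrt_coord0|].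
apply littleo_ext with (fun x => (sqrt_coord x - jet_eval sqrt_jet x)
  + x ^ 2 * (s2 + s3 * x + s4 * x ^ 2 + s5 * x ^ 3)).
{ intros x; unfold jet_eval, sqrt_jet; simpl; ring. }
apply littleo_plus; [apply (littleo_le_order 1 5); [lia|apply sqrt_coord_jet]|].
apply littleo_pow_mult, (ex_derive_continuous (fun x => _ + _ * x + _ * x ^ 2 + _ * x ^ 3)).
auto_derive; auto.
Qed.

Lemma is_derive_sqrt_coord_neq0 x : Rabs x < d1 -> x <> 0 ->
  is_derive sqrt_coord x (Derive V x / (2 * sqrt_coord x)).
Proof.
intros Hx Hx0.
assert (HV : is_derive V x (Derive V x))
  by (apply Derive_correct, (HD 1); [lia|]; destruct (Hbounds x Hx); auto).
assert (HVx := V_pos x Hx Hx0).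
destruct (Rle_dec 0 x) as [Hp|Hn].
- apply is_derive_ext_loc with (fun y => sqrt (V y)).
  { exists (mkposreal x ltac:(lra)); intros y Hy; change (Rabs (y - x) < x) in Hy.
    apply Rabs_lt_between' in Hy; unfold sqrt_coord; destruct (Rle_dec 0 y); auto; lra. }
  unfold sqrt_coord; destruct (Rle_dec 0 x); [|lra]; now apply is_derive_sqrt.
- apply is_derive_ext_loc with (fun y => - sqrt (V y)).
  { exists (mkposreal (- x) ltac:(lra)); intros y Hy; change (Rabs (y - x) < - x) in Hy.
    apply Rabs_lt_between' in Hy; unfold sqrt_coord; destruct (Rle_dec 0 y); auto; lra. }
  unfold sqrt_coord; destruct (Rle_dec 0 x) as [|_]; [lra|].
  replace (Derive V x / (2 * - sqrt (V x))) with (- (Derive V x / (2 * sqrt (V x))))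
    by (field; apply Rgt_not_eq, sqrt_lt_R0; auto).
  apply (is_derive_opp (fun y => sqrt (V y))); now apply is_derive_sqrt.
Qed.

Definition sqrt_coord_deriv x :=
  if Req_EM_T x 0 then s1 else Derive V x / (2 * sqrt_coord x).

Lemma is_derive_sqrt_coord x : Rabs x < d1 -> is_derive sqrt_coord x (sqrt_coord_deriv x).
Proof.
intros Hx; unfold sqrt_coord_deriv; destruct (Req_EM_T x 0) as [->|Hx0].
- apply is_derive_sqrt_coord0.
- now apply is_derive_sqrt_coord_neq0.
Qed.

Lemma Derive_V_sqrt_coord x : Rabs x < d1 -> Derive V x = 2 * sqrt_coord x * sqrt_coord_deriv x.
Proof.
intros Hx; apply is_derive_unique.
apply is_derive_ext_loc with (fun y => sqrt_coord y * sqrt_coord y).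
{ exists (mkposreal (d1 - Rabs x) ltac:(lra)); intros y Hy; change R in y.
  change (Rabs (y - x) < d1 - Rabs x) in Hy.
  apply sqrt_coord_sq; pose proof (Rabs_triang (y - x) x); replace (y - x + x) with y in H by ring.
  lra. }
assert (H := is_derive_mult sqrt_coord sqrt_coord x _ _
  (is_derive_sqrt_coord x Hx) (is_derive_sqrt_coord x Hx) Rmult_comm).
replace (2 * sqrt_coord x * sqrt_coord_deriv x)
  with (plus (mult (sqrt_coord_deriv x) (sqrt_coord x)) (mult (sqrt_coord x) (sqrt_coord_deriv x)))
  by (unfold plus, mult; simpl; ring); exact H.
Qed.

Lemma sqrt_coord_deriv_jet : has_jet 4 sqrt_coord_deriv (jet_deriv sqrt_jet).
Proof.
pose proof s1_pos as Hs1.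
apply (littleo_div 4 (fun x => Derive V x - 2 * sqrt_coord x * jet_eval (jet_deriv sqrt_jet) x)
  (fun x => 2 * sqrt_coord x)).
- apply littleo_ext with (fun x => (Derive V x - 2 * jet_eval sqrt_jet x * jet_eval (jet_deriv sqrt_jet) x)
    + (sqrt_coord x - jet_eval sqrt_jet x) * (- 2 * jet_eval (jet_deriv sqrt_jet) x)).
  { intros; ring. }
  apply littleo_plus; [exact DV_sqrt_jet|].
  apply littleo_mult_bounded; [exact sqrt_coord_jet|].
  apply continuous_bounded_near0, (ex_derive_continuous (fun x => -2 * jet_eval _ x)).
  unfold jet_eval; auto_derive; auto.
- unfold sqrt_coord_deriv; destruct (Req_EM_T 0 0); [|congruence].
  unfold jet_eval, jet_deriv, sqrt_jet; simpl; ring.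
- exists (2 * (s1 / 3)); split; [lra|]; exists d1; split; auto; intros x Hx Hx0; split.
  + rewrite Rabs_mult, (Rabs_right 2) by lra; pose proof (sqrt_coord_abs_ge x Hx); lra.
  + unfold sqrt_coord_deriv; destruct (Req_EM_T x 0); [congruence|].
    field; now apply sqrt_coord_neq0.
Qed.

Lemma sqrt_coord_deriv_continuous x : Rabs x < d1 -> continuous sqrt_coord_deriv x.
Proof.
intros Hx; destruct (Req_dec x 0) as [->|Hx0].
- apply littleo0_continuous; apply littleo_ext with (fun x => (sqrt_coord_deriv x
    - jet_eval (jet_deriv sqrt_jet) x) + (jet_eval (jet_deriv sqrt_jet) x - jet_eval (jet_deriv sqrt_jet) 0)).
  { intros x; replace (sqrt_coord_deriv 0) with (jet_eval (jet_deriv sqrt_jet) 0); [ring|].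
    unfold sqrt_coord_deriv; destruct (Req_EM_T 0 0); [|congruence].
    unfold jet_eval, jet_deriv, sqrt_jet; simpl; ring. }
  apply littleo_plus; [apply (littleo_le_order 0 4); [lia|apply sqrt_coord_deriv_jet]|].
  apply continuous_littleo0, jet_eval_continuous.
- apply continuous_ext_loc with (fun y => Derive V y / (2 * sqrt_coord y)).
  { exists (mkposreal (Rabs x) (Rabs_pos_lt x Hx0)); intros y Hy.
    change (Rabs (y - x) < Rabs x) in Hy; unfold sqrt_coord_deriv.
    destruct (Req_EM_T y 0) as [->|]; auto.
    rewrite Rminus_0_l, Rabs_Ropp in Hy; lra. }
  assert (HV2x : ex_derive (Derive V) x)
    by (apply (HD 2); [lia|]; destruct (Hbounds x Hx); auto).
  apply (ex_derive_continuous (fun y => Derive V y / (2 * sqrt_coord y))).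
  auto_derive; repeat split; auto.
  + eexists; now apply is_derive_sqrt_coord_neq0.
  + pose proof (sqrt_coord_neq0 x Hx Hx0); lra.
Qed.

Lemma near0_sqrt_coord_deriv_bounds :
  near0 (fun x => Rabs x < d1 /\ s1 / 2 <= sqrt_coord_deriv x <= 2 * s1).
Proof.
pose proof s1_pos as Hs1.
assert (H0 := littleo_le_order 0 4 _ ltac:(lia) sqrt_coord_deriv_jet (s1 / 4) ltac:(lra)).
generalize (near0_and _ _ (near0_abs_lt d1 Hd1) H0); apply near0_impl; intros x [Hx H].
simpl in H; rewrite Rmult_1_r in H; destruct (Hbounds x Hx) as [_ [_ [_ H3]]].
apply Rabs_le_between' in H; apply Rabs_le_between' in H3; split; [auto|lra].
Qed.

Variable d2 : R.
Hypothesis Hd2 : 0 < d2.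
Hypothesis Hbounds2 : forall x, Rabs x < d2 -> Rabs x < d1 /\ s1 / 2 <= sqrt_coord_deriv x <= 2 * s1.

Lemma sqrt_coord_incr u v : Rabs u < d2 -> Rabs v < d2 -> u <= v ->
  s1 / 2 * (v - u) <= sqrt_coord v - sqrt_coord u.
Proof.
intros Hu Hv Huv.
assert (Hb : forall y, u <= y <= v -> Rabs y < d2)
  by (intros y Hy; apply Rabs_def2 in Hu; apply Rabs_def2 in Hv; apply Rabs_def1; lra).
destruct (MVT_gen sqrt_coord u v sqrt_coord_deriv) as [c [Hc1 Hc2]];
  rewrite ?Rmin_left, ?Rmax_right in * by lra.
- intros y Hy; apply is_derive_sqrt_coord, Hbounds2, Hb; lra.
- intros y Hy; apply continuity_pt_filterlim, (ex_derive_continuous sqrt_coord).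
  eexists; apply is_derive_sqrt_coord, Hbounds2, Hb; lra.
- rewrite Hc2; destruct (Hbounds2 c (Hb c Hc1)); nra.
Qed.

Definition sig0 := Rmin (sqrt_coord (d2 / 2)) (- sqrt_coord (- (d2 / 2))).

Lemma sig0_pos : 0 < sig0.
Proof.
pose proof s1_pos; unfold sig0; apply Rmin_pos.
- pose proof (sqrt_coord_incr 0 (d2 / 2)); rewrite sqrt_coord0 in H0.
  assert (Rabs (d2 / 2) < d2) by (rewrite Rabs_right; lra).
  rewrite Rabs_R0 in H0; specialize (H0 Hd2 H1 ltac:(lra)); nra.
- pose proof (sqrt_coord_incr (- (d2 / 2)) 0); rewrite sqrt_coord0 in H0.
  assert (Rabs (- (d2 / 2)) < d2) by (rewrite Rabs_Ropp, Rabs_right; lra).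
  rewrite Rabs_R0 in H0; specialize (H0 H1 Hd2 ltac:(lra)); nra.
Qed.

Lemma sqrt_coord_surj sg : exists x, Rabs sg < sig0 -> Rabs x < d2 /\ sqrt_coord x = sg.
Proof.
destruct (Rlt_dec (Rabs sg) sig0) as [H|H]; [|exists 0; intros; lra].
pose proof (Rmin_l (sqrt_coord (d2 / 2)) (- sqrt_coord (- (d2 / 2)))).
pose proof (Rmin_r (sqrt_coord (d2 / 2)) (- sqrt_coord (- (d2 / 2)))).
unfold sig0 in H; apply Rabs_def2 in H.
destruct (Ranalysis5.IVT_interv (fun y => sqrt_coord y - sg) (- (d2 / 2)) (d2 / 2))
  as [z [Hz1 Hz2]]; try lra.
- intros a Ha; apply continuity_pt_minus; [|apply continuity_pt_const; intros ? ?; auto].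
  apply continuity_pt_filterlim, (ex_derive_continuous sqrt_coord); eexists.
  apply is_derive_sqrt_coord, Hbounds2, Rabs_def1; lra.
- exists z; intros _; split; [apply Rabs_def1; lra|lra].
Qed.

Definition sqrt_coord_inv sg := proj1_sig (constructive_indefinite_description _ (sqrt_coord_surj sg)).

Lemma sqrt_coord_invK sg : Rabs sg < sig0 ->
  Rabs (sqrt_coord_inv sg) < d2 /\ sqrt_coord (sqrt_coord_inv sg) = sg.
Proof. exact (proj2_sig (constructive_indefinite_description _ (sqrt_coord_surj sg))). Qed.

Lemma sqrt_coord_inv_lipschitz a b : Rabs a < sig0 -> Rabs b < sig0 ->
  Rabs (sqrt_coord_inv a - sqrt_coord_inv b) <= 2 / s1 * Rabs (a - b).
Proof.
intros Ha Hb; pose proof s1_pos.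
destruct (sqrt_coord_invK a Ha) as [Ga Ea]; destruct (sqrt_coord_invK b Hb) as [Gb Eb].
set (x := sqrt_coord_inv a) in *; set (y := sqrt_coord_inv b) in *.
apply Rmult_le_reg_l with (s1 / 2); [lra|].
replace (s1 / 2 * (2 / s1 * Rabs (a - b))) with (Rabs (a - b)) by (field; lra).
rewrite <- (Rabs_right (s1 / 2)) at 1 by lra; rewrite <- Rabs_mult, <- Ea, <- Eb.
destruct (Rle_dec x y) as [Hxy|Hxy].
- pose proof (sqrt_coord_incr x y Ga Gb Hxy).
  rewrite Rabs_left1, (Rabs_left1 (_ - _)) by nra; lra.
- pose proof (sqrt_coord_incr y x Gb Ga ltac:(lra)).
  rewrite Rabs_right, (Rabs_right (_ - _)) by nra; lra.
Qed.

Lemma sqrt_coord_inv0 : sqrt_coord_inv 0 = 0.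
Proof.
assert (H0 : Rabs 0 < sig0) by (rewrite Rabs_R0; apply sig0_pos).
destruct (sqrt_coord_invK 0 H0) as [Hx E]; pose proof s1_pos.
destruct (Rle_dec (sqrt_coord_inv 0) 0) as [Hle|Hgt].
- pose proof (sqrt_coord_incr _ 0 Hx ltac:(rewrite Rabs_R0; auto) Hle).
  rewrite E, sqrt_coord0 in H1; nra.
- pose proof (sqrt_coord_incr 0 _ ltac:(rewrite Rabs_R0; auto) Hx ltac:(lra)).
  rewrite E, sqrt_coord0 in H1; nra.
Qed.

Lemma sqrt_coord_inv_continuous sg : Rabs sg < sig0 -> continuous sqrt_coord_inv sg.
Proof.
intros H; apply continuity_pt_filterlim; intros eps He; pose proof s1_pos.
exists (Rmin (sig0 - Rabs sg) (eps * s1 / 4)); split.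
{ apply Rmin_pos; [lra|apply Rmult_lt_0_compat; nra]. }
intros x [_ Hx]; change R in x; simpl in Hx |- *; unfold R_dist in Hx |- *.
pose proof (Rmin_l (sig0 - Rabs sg) (eps * s1 / 4)); pose proof (Rmin_r (sig0 - Rabs sg) (eps * s1 / 4)).
assert (Hxs : Rabs x < sig0)
  by (pose proof (Rabs_triang (x - sg) sg); replace (x - sg + sg) with x in H3 by ring; lra).
eapply Rle_lt_trans; [apply (sqrt_coord_inv_lipschitz x sg Hxs H)|].
apply Rmult_lt_reg_l with (s1 / 2); [lra|].
replace (s1 / 2 * (2 / s1 * Rabs (x - sg))) with (Rabs (x - sg)) by (field; lra); nra.
Qed.

Definition sqrt_coord_inv_deriv sg := / sqrt_coord_deriv (sqrt_coord_inv sg).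

Lemma sqrt_coord_inv_deriv_ge sg : Rabs sg < sig0 -> / (2 * s1) <= sqrt_coord_inv_deriv sg.
Proof.
intros H; destruct (sqrt_coord_invK sg H) as [Hx _]; destruct (Hbounds2 _ Hx) as [_ Hb].
pose proof s1_pos; apply Rinv_le_contravar; lra.
Qed.

Lemma is_derive_sqrt_coord_inv sg : Rabs sg < sig0 ->
  is_derive sqrt_coord_inv sg (sqrt_coord_inv_deriv sg).
Proof.
intros H; destruct (sqrt_coord_invK sg H) as [Hx _]; destruct (Hbounds2 _ Hx) as [Hx1 Hb].
apply (is_derive_inverse sqrt_coord _ sg _ (sig0 - Rabs sg)); [lra| |
  now apply sqrt_coord_inv_continuous|now apply is_derive_sqrt_coord|pose proof s1_pos; lra].
intros z Hz; apply sqrt_coord_invK.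
pose proof (Rabs_triang (z - sg) sg); replace (z - sg + sg) with z in H0 by ring; lra.
Qed.

Lemma sqrt_coord_inv_deriv_continuous sg : Rabs sg < sig0 -> continuous sqrt_coord_inv_deriv sg.
Proof.
intros H; destruct (sqrt_coord_invK sg H) as [Hx _]; destruct (Hbounds2 _ Hx) as [Hx1 Hb].
apply continuous_Rinv_comp; [|pose proof s1_pos; lra].
apply (continuous_comp sqrt_coord_inv sqrt_coord_deriv);
  [now apply sqrt_coord_inv_continuous|now apply sqrt_coord_deriv_continuous].
Qed.

Lemma Derive_V_sqrt_coord_inv sg : Rabs sg < sig0 ->
  Derive V (sqrt_coord_inv sg) = 2 * sg / sqrt_coord_inv_deriv sg.
Proof.
intros H; destruct (sqrt_coord_invK sg H) as [Hx E]; destruct (Hbounds2 _ Hx) as [Hx1 Hb].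
rewrite Derive_V_sqrt_coord, E by auto; unfold sqrt_coord_inv_deriv.
pose proof s1_pos; field; lra.
Qed.

Lemma sqrt_jet_incr u v : Rabs u < d1 -> Rabs v < d1 -> u <= v ->
  s1 / 2 * (v - u) <= jet_eval sqrt_jet v - jet_eval sqrt_jet u.
Proof.
intros Hu Hv Huv; pose proof s1_pos.
assert (Hb : forall y, u <= y <= v -> Rabs y < d1)
  by (intros y Hy; apply Rabs_def2 in Hu; apply Rabs_def2 in Hv; apply Rabs_def1; lra).
destruct (MVT_gen (jet_eval sqrt_jet) u v (jet_eval (jet_deriv sqrt_jet))) as [c [Hc1 Hc2]];
  rewrite ?Rmin_left, ?Rmax_right in * by lra.
- intros y Hy; unfold jet_eval, jet_deriv, sqrt_jet; simpl; auto_derive; auto; ring.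
- intros y Hy; apply continuity_pt_filterlim, jet_eval_continuous.
- rewrite Hc2; destruct (Hbounds c (Hb c Hc1)) as [_ [_ [_ H3]]].
  apply Rabs_le_between' in H3; nra.
Qed.

Lemma sqrt_coord_inv_jet : has_jet 5 sqrt_coord_inv (series_inverse sqrt_jet).
Proof.
pose proof s1_pos as Hs1; set (Gj := series_inverse sqrt_jet).
assert (HGlin : exists C d0, 0 < d0 /\ forall x, Rabs x < d0 -> Rabs (sqrt_coord_inv x) <= C * Rabs x).
{ exists (2 / s1), sig0; split; [apply sig0_pos|]; intros x Hx.
  pose proof (sqrt_coord_inv_lipschitz x 0 Hx ltac:(rewrite Rabs_R0; apply sig0_pos)).
  now rewrite sqrt_coord_inv0, !Rminus_0_r in H. }
(* [S (G sg) = sg + o(sg^5)] since [S] approximates [sqrt_coord] and [G] inverts [sqrt_coord] *)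
assert (A1 : has_jet 5 (fun sg => jet_eval sqrt_jet (sqrt_coord_inv sg)) jet_id).
{ apply littleo_ext_near with (fun sg => - (sqrt_coord (sqrt_coord_inv sg) - jet_eval sqrt_jet (sqrt_coord_inv sg))).
  - exists sig0; split; [apply sig0_pos|]; intros x Hx.
    destruct (sqrt_coord_invK x Hx) as [_ E]; rewrite E; unfold jet_eval, jet_id; simpl; ring.
  - apply littleo_opp, (littleo_comp 5 (fun y => sqrt_coord y - jet_eval sqrt_jet y)); auto.
    exact sqrt_coord_jet. }
assert (A2 : has_jet 5 (fun sg => jet_eval sqrt_jet (jet_eval Gj sg)) jet_id).
{ unfold Gj; rewrite <- (jet_comp_series_inverse sqrt_jet) by (simpl; lra).
  apply has_jet_comp; [lia|reflexivity|apply has_jet_eval..]. }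
(* [S] is bi-Lipschitz near 0, so [S (G sg) - S (Gj sg) = o(sg^5)] transfers to [G - Gj]. *)
destruct (continuous_littleo0 (jet_eval Gj) (jet_eval_continuous Gj 0) (d1 / 2) ltac:(lra))
  as [e1 [He1 H1]].
replace (jet_eval Gj 0) with 0 in H1 by (unfold jet_eval, Gj; simpl; ring).
apply littleo_dominated with (fun sg => 2 / s1 *
  (jet_eval sqrt_jet (sqrt_coord_inv sg) - jet_eval sqrt_jet (jet_eval Gj sg))).
2:{ apply littleo_scal; eapply littleo_ext; [|apply (littleo_minus _ _ _ A1 A2)]; intros; simpl; ring. }
exists (Rmin e1 sig0); split; [apply Rmin_pos; auto; apply sig0_pos|]; intros x Hx.
pose proof (Rmin_l e1 sig0); pose proof (Rmin_r e1 sig0).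
specialize (H1 x ltac:(lra)); simpl in H1; rewrite Rminus_0_r, Rmult_1_r in H1.
assert (Hx2 : Rabs (jet_eval Gj x) < d1) by lra.
assert (Hx3 : Rabs (sqrt_coord_inv x) < d1)
  by (destruct (sqrt_coord_invK x ltac:(lra)) as [Hx' _]; apply Hbounds2 in Hx'; tauto).
rewrite Rabs_mult, (Rabs_right (2 / s1)) by (apply Rle_ge, Rlt_le, Rdiv_lt_0_compat; lra).
apply Rmult_le_reg_l with (s1 / 2); [lra|].
replace (s1 / 2 * (2 / s1 * _)) with (Rabs (jet_eval sqrt_jet (sqrt_coord_inv x)
  - jet_eval sqrt_jet (jet_eval Gj x))) by (field; lra).
destruct (Rle_dec (sqrt_coord_inv x) (jet_eval Gj x)) as [Hle|Hgt].
- pose proof (sqrt_jet_incr _ _ Hx3 Hx2 Hle).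
  rewrite Rabs_left1, (Rabs_left1 (_ - _)) by nra; lra.
- pose proof (sqrt_jet_incr _ _ Hx2 Hx3 ltac:(lra)).
  rewrite Rabs_right, (Rabs_right (_ - _)) by nra; lra.
Qed.

Lemma sqrt_coord_inv_deriv_jet :
  has_jet 4 sqrt_coord_inv_deriv (jet_deriv (series_inverse sqrt_jet)).
Proof.
pose proof s1_pos as Hs1.
apply (has_jet_agree4 4 _ (jet_inv (jet_comp (jet_deriv sqrt_jet) (series_inverse sqrt_jet))));
  [lia|apply jet_inv_deriv_series_inverse; simpl; lra|].
apply has_jet_inv; [lia| |].
- rewrite jet_comp_expand by reflexivity; simpl; lra.
- apply (has_jet_comp 4 sqrt_coord_deriv sqrt_coord_inv); [lia|reflexivity|exact sqrt_coord_deriv_jet|].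
  apply (has_jet_le_order 4 5); [lia|exact sqrt_coord_inv_jet].
Qed.

Lemma isochrony_series_inverse_coeffs alpha beta :
  alpha < 0 < beta -> isochronous_center V alpha beta ->
  c3 (series_inverse sqrt_jet) = 0 /\ c5 (series_inverse sqrt_jet) = 0.
Proof.
intros Hab Hiso; pose proof s1_pos.
destruct (Gd_jet_even_coeffs_eq0 V sqrt_coord_inv sqrt_coord_inv_deriv sig0 (/ (2 * s1))
  alpha beta (jet_deriv (series_inverse sqrt_jet))) as [H2 H4]; auto.
- apply sig0_pos.
- apply Rinv_0_lt_compat; lra.
- exact is_derive_sqrt_coord_inv.
- exact sqrt_coord_inv_deriv_continuous.
- exact sqrt_coord_inv_deriv_ge.
- exact Derive_V_sqrt_coord_inv.
- exact sqrt_coord_inv0.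
- exact sqrt_coord_inv_deriv_jet.
- cbn [c2 c4 jet_deriv] in H2, H4; split; lra.
Qed.

End SqrtCoordinate.

Lemma isochrony_derivative_relations (V : R -> R) : 0 < Derive_n V 2 0 ->
  c3 (series_inverse (sqrt_jet V)) = 0 -> c5 (series_inverse (sqrt_jet V)) = 0 ->
  Derive_n V 4 0 = 5 * (Derive_n V 3 0) ^ 2 / (3 * Derive_n V 2 0) /\
  Derive_n V 6 0 = 7 * Derive_n V 3 0 * Derive_n V 5 0 / Derive_n V 2 0
    - 140 * (Derive_n V 3 0) ^ 4 / (9 * (Derive_n V 2 0) ^ 3).
Proof.
intros HV2 H3 H5; pose proof (s1_pos V HV2) as Hs1.
destruct (Derive_n_V_coeffs V HV2) as [E2 [E3 [E4 [E5 E6]]]]; rewrite E2, E3, E4, E5, E6.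
cbn [c1 c2 c3 c4 c5 series_inverse sqrt_jet] in H3, H5.
set (a1 := s1 V) in *; set (a2 := s2 V) in *; set (a3 := s3 V) in *;
  set (a4 := s4 V) in *; set (a5 := s5 V) in *.
assert (Hdiv : forall p k, p / a1 ^ k = 0 -> p = 0).
{ intros p k H; apply Rmult_integral in H as [H|H]; auto.
  exfalso; revert H; apply Rinv_neq_0_compat, pow_nonzero; lra. }
apply Hdiv in H3; apply Hdiv in H5.
assert (E3' : a3 = 2 * a2 ^ 2 / a1)
  by (replace a3 with ((2 * a2 ^ 2 - (2 * a2 ^ 2 - a1 * a3)) / a1) by (field; lra); rewrite H3; field; lra).
set (P := 14 * a2 ^ 4 - 21 * a1 * a2 ^ 2 * a3 + 3 * a1 ^ 2 * a3 ^ 2 + 6 * a1 ^ 2 * a2 * a4) in H5.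
assert (E5' : a5 = P / a1 ^ 3)
  by (replace a5 with ((P - (P - a1 ^ 3 * a5)) / a1 ^ 3) by (field; lra); rewrite H5; field; lra).
unfold P in E5'.
rewrite E5', E3'; split; field; lra.
Qed.

Theorem corollary2p3 (V : R -> R) (alpha beta : R) :
  admits_D6_at0 V ->
  V 0 = 0 -> Derive V 0 = 0 -> Derive_n V 2 0 > 0 ->
  standing_J V alpha beta ->
  isochronous_center V alpha beta ->
  Derive_n V 4 0 = 5 * (Derive_n V 3 0) ^ 2 / (3 * Derive_n V 2 0) /\
  Derive_n V 6 0 =
    7 * Derive_n V 3 0 * Derive_n V 5 0 / Derive_n V 2 0
    - 140 * (Derive_n V 3 0) ^ 4 / (9 * (Derive_n V 2 0) ^ 3).
Proof.
intros [[d [Hd HD]] HD6] HV0 HV1 HV2 [Hab _] Hiso.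
destruct (near0_bounds V d Hd HD HD6 HV0 HV1 HV2) as [d1 [Hd1 Hb1]].
destruct (near0_sqrt_coord_deriv_bounds V d Hd HD HD6 HV0 HV1 HV2 d1 Hd1 Hb1) as [d2 [Hd2 Hb2]].
destruct (isochrony_series_inverse_coeffs V d Hd HD HD6 HV0 HV1 HV2 d1 Hd1 Hb1 d2 Hd2 Hb2
  alpha beta Hab Hiso) as [H3 H5].
now apply isochrony_derivative_relations.
Qed.
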